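(* Inconsistency of disjunctive finitely recursive programs is semidecidable: there is a procedure which, given a disjunctive finitely recursive program $P$, halts reporting inconsistency if and only if $P$ has no stable model.
   Context: A disjunctive program is a finite set of rules $A_1\vee\dots\vee A_m\leftarrow L_1,\dots,L_n$ ($m>0$, $n\ge0$), $A_j$ atoms, $L_i$ atoms or negated atoms $\mathtt{not}\,A$, over a first-order language possibly with function symbols (so the Herbrand universe may be infinite); $head(r)=\{A_1,\dots,A_m\}$. $\mathsf{Ground}(P)$ is its ground instantiation. For a set $M$ of ground atoms, $P^M$ is obtained from $\mathsf{Ground}(P)$ by deleting rules having some $\mathtt{not}\,B$ in the body with $B\in M$ and deleting negative literals from the remaining rules; $M$ is a stable model iff it is a minimal Herbrand model of $P^M$. $P$ is inconsistent iff it has no stable model. The dependency graph has ground atoms as vertices and an edge $A\to B$ whenever some $r\in\mathsf{Ground}(P)$ has $A\in head(r)$ and $B$ occurring in $r$ (body, positively or negated, or head); $A$ depends on $B$ if there is a directed path from $A$ to $B$ (every atom depends on itself). $P$ is finitely recursive iff each ground atom depends on finitely many ground atoms. *)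

From Stdlib Require Import List Arith Relations.
Import ListNotations.

(*    "Procedure" = a mu-recursive program; "halts on x" = the partial *)
(*    function it denotes is defined on the input [x].                  *)

Inductive mu : Type :=
| MZero : mu
| MSucc : mu
| MProj : nat -> mu
| MComp : mu -> list mu -> mu
| MRec  : mu -> mu -> mu
| MMin  : mu -> mu.

Inductive eval : mu -> list nat -> nat -> Prop :=
| ev_zero xs : eval MZero xs 0
| ev_succ xs : eval MSucc xs (S (hd 0 xs))
| ev_proj i xs : eval (MProj i) xs (nth i xs 0)
| ev_comp f gs xs ys y :
    evalL gs xs ys -> eval f ys y -> eval (MComp f gs) xs y
| ev_rec0 g h xs y : eval g xs y -> eval (MRec g h) (0 :: xs) y
| ev_recS g h n xs z y :
    eval (MRec g h) (n :: xs) z -> eval h (n :: z :: xs) y ->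
    eval (MRec g h) (S n :: xs) y
| ev_min f xs n :
    eval f (n :: xs) 0 ->
    (forall m, m < n -> exists k, eval f (m :: xs) (S k)) ->
    eval (MMin f) xs n
with evalL : list mu -> list nat -> list nat -> Prop :=
| evL_nil xs : evalL [] xs []
| evL_cons g gs xs y ys :
    eval g xs y -> evalL gs xs ys -> evalL (g :: gs) xs (y :: ys).

Definition halts (e : mu) (x : nat) : Prop := exists y, eval e [x] y.

(*    Function symbols are identified by a name (nat) together with     *)
(*    their arity (the length of the argument list); same for predicates.*)

Inductive term : Type :=
| Var : nat -> term
| Fn  : nat -> list term -> term.

Record atom : Type := Atom { pred : nat; args : list term }.

Inductive literal : Type :=
| Pos : atom -> literal
| Neg : atom -> literal.

Record rule : Type := Rule { head : list atom; body : list literal }.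

Definition program := list rule.

Definition wf_program (P : program) : Prop :=
  forall r, In r P -> head r <> [].

Definition cpair (x y : nat) : nat := (x + y) * (x + y + 1) / 2 + y.

Definition enc_list {A : Type} (e : A -> nat) : list A -> nat :=
  fix go l := match l with [] => 0 | x :: l' => S (cpair (e x) (go l')) end.

Fixpoint enc_term (t : term) : nat :=
  match t with
  | Var n => cpair 0 n
  | Fn f ts =>
      cpair 1 (cpair f ((fix go l := match l with
                                     | [] => 0
                                     | u :: l' => S (cpair (enc_term u) (go l'))
                                     end) ts))
  end.

Definition enc_atom (a : atom) : nat := cpair (pred a) (enc_list enc_term (args a)).

Definition enc_literal (l : literal) : nat :=
  match l with Pos a => cpair 0 (enc_atom a) | Neg a => cpair 1 (enc_atom a) end.

Definition enc_rule (r : rule) : nat :=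
  cpair (enc_list enc_atom (head r)) (enc_list enc_literal (body r)).

Definition enc_program (P : program) : nat := enc_list enc_rule P.

Fixpoint sym_in_term (f n : nat) (t : term) : Prop :=
  match t with
  | Var _ => False
  | Fn g ts =>
      (g = f /\ length ts = n) \/
      (fix go l := match l with [] => False | u :: l' => sym_in_term f n u \/ go l' end) ts
  end.

Definition sym_in_atom (f n : nat) (a : atom) : Prop :=
  exists t, In t (args a) /\ sym_in_term f n t.

Definition lit_atom (l : literal) : atom := match l with Pos a => a | Neg a => a end.

Definition rule_atoms (r : rule) : list atom := head r ++ map lit_atom (body r).

Definition sym_in_program (P : program) (f n : nat) : Prop :=
  exists r a, In r P /\ In a (rule_atoms r) /\ sym_in_atom f n a.

(* Herbrand universe of the language of P: ground terms built from the
   function symbols (with their arities) of P; if P has no constant, a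
   fresh constant (Fn 0 []) is added, as usual. *)
Inductive in_HU (P : program) : term -> Prop :=
| hu_fn f ts : sym_in_program P f (length ts) -> Forall (in_HU P) ts -> in_HU P (Fn f ts)
| hu_default : (forall f, ~ sym_in_program P f 0) -> in_HU P (Fn 0 []).

(* ground atoms of the language of P (Herbrand base, predicates arbitrary) *)
Definition ground_atom (P : program) (a : atom) : Prop := Forall (in_HU P) (args a).

Fixpoint subst_term (s : nat -> term) (t : term) : term :=
  match t with
  | Var x => s x
  | Fn f ts => Fn f (map (subst_term s) ts)
  end.

Definition subst_atom (s : nat -> term) (a : atom) : atom :=
  Atom (pred a) (map (subst_term s) (args a)).

Definition subst_literal (s : nat -> term) (l : literal) : literal :=
  match l with Pos a => Pos (subst_atom s a) | Neg a => Neg (subst_atom s a) end.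

Definition subst_rule (s : nat -> term) (r : rule) : rule :=
  Rule (map (subst_atom s) (head r)) (map (subst_literal s) (body r)).

Definition ground_rule (P : program) (g : rule) : Prop :=
  exists r s, In r P /\ (forall x, in_HU P (s x)) /\ g = subst_rule s r.

Definition interp := atom -> Prop.

Definition pos_body (r : rule) : list atom :=
  flat_map (fun l => match l with Pos a => [a] | Neg _ => [] end) (body r).
Definition neg_body (r : rule) : list atom :=
  flat_map (fun l => match l with Pos _ => [] | Neg a => [a] end) (body r).

Definition in_reduct (P : program) (M : interp) (g : rule) : Prop :=
  exists g0, ground_rule P g0 /\ (forall B, In B (neg_body g0) -> ~ M B) /\
             g = Rule (head g0) (map Pos (pos_body g0)).

Definition model_of_reduct (P : program) (M N : interp) : Prop :=
  forall g, in_reduct P M g ->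
    (forall B, In B (pos_body g) -> N B) -> exists A, In A (head g) /\ N A.

Definition herbrand_interp (P : program) (N : interp) : Prop :=
  forall A, N A -> ground_atom P A.

Definition stable_model (P : program) (M : interp) : Prop :=
  herbrand_interp P M /\ model_of_reduct P M M /\
  (forall N, herbrand_interp P N -> (forall A, N A -> M A) ->
             model_of_reduct P M N -> forall A, M A -> N A).

Definition inconsistent (P : program) : Prop := ~ exists M, stable_model P M.

Definition dep_edge (P : program) (A B : atom) : Prop :=
  exists g, ground_rule P g /\ In A (head g) /\ In B (rule_atoms g).

Definition depends (P : program) : atom -> atom -> Prop :=
  clos_refl_trans atom (dep_edge P).

Definition finitely_recursive (P : program) : Prop :=
  forall A, ground_atom P A ->
    exists l : list atom, forall B, depends P A B -> In B l.

(* A finite witness of inconsistency is a finite set G of ground instances of rules of P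
   containing every ground instance whose head meets an atom of G, and having no stable model:
   since the atoms of G then form a splitting set of Ground(P), every stable model of P would
   restrict to a stable model of G.  Conversely, finite recursion makes the atoms on which the
   first n ground atoms depend a finite splitting set U_n; if each U_n carried a stable model,
   König's lemma would assemble a stable model of P, so an inconsistent P has such a witness.
   Checking a candidate witness is primitive recursive: either the Herbrand universe is finite,
   or finite recursion forces every variable of a rule to occur in each of its head atoms, and
   in both cases the instances whose heads meet G only involve terms of bounded code.  Unbounded
   search over candidates then halts exactly on inconsistent programs. *)

From Stdlib Require Import List Arith Lia Bool Setoid Morphisms FunctionalExtensionality.
From Stdlib Require Import Classical ClassicalEpsilon Relations.
Import ListNotations.

(** * Primitive recursive expressions *)

Inductive pexp : Type :=
| EZ : pexp
| ES : pexp -> pexp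
| EV : nat -> pexp
| ER : pexp -> pexp -> pexp -> pexp.

Definition scons (x : nat) (env : nat -> nat) : nat -> nat :=
  fun i => match i with 0 => x | S j => env j end.

Fixpoint primrec (b : nat) (h : nat -> nat -> nat) (n : nat) : nat :=
  match n with 0 => b | S m => h m (primrec b h m) end.

Fixpoint den (e : pexp) (env : nat -> nat) : nat :=
  match e with
  | EZ => 0
  | ES a => S (den a env)
  | EV i => env i
  | ER n g h => primrec (den g env) (fun m acc => den h (scons m (scons acc env))) (den n env)
  end.

Fixpoint var_bound (e : pexp) : nat :=
  match e with
  | EZ => 0 | ES a => var_bound a | EV i => S i
  | ER n g h => max (var_bound n) (max (var_bound g) (var_bound h - 2))
  end.

(* [MRec] recurses on its first argument, so the environment visible to [g] and [h] is passed
   on as an explicit finite prefix. *)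
Fixpoint compile (e : pexp) : mu :=
  match e with
  | EZ => MZero
  | ES a => MComp MSucc [compile a]
  | EV i => MProj i
  | ER n g h => MComp (MRec (compile g) (compile h))
                  (compile n :: map MProj (seq 0 (max (var_bound g) (var_bound h - 2))))
  end.

Lemma primrec_ext : forall b h1 h2 n, (forall m a, h1 m a = h2 m a) -> primrec b h1 n = primrec b h2 n.
Proof. induction n; simpl; intros; auto. rewrite IHn; auto. Qed.

Lemma den_ext : forall e env1 env2, (forall i, i < var_bound e -> env1 i = env2 i) ->
  den e env1 = den e env2.
Proof.
  induction e; simpl; intros env1 env2 H; auto.
  - rewrite (IHe2 env1 env2) by (intros; apply H; lia).
    rewrite (IHe1 env1 env2) by (intros; apply H; lia).
    apply primrec_ext. intros m a. apply IHe3.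
    intros [|[|i]] Hi; simpl; auto. apply H; lia.
Qed.

Lemma den_ext_all : forall e env1 env2, (forall i, env1 i = env2 i) -> den e env1 = den e env2.
Proof. intros; apply den_ext; auto. Qed.

Lemma nth_map_seq : forall (f : nat -> nat) n i, i < n -> nth i (map f (seq 0 n)) 0 = f i.
Proof.
  intros. rewrite nth_indep with (d' := f 0) by (rewrite length_map, length_seq; lia).
  rewrite map_nth, seq_nth by lia. reflexivity.
Qed.

Lemma evalL_proj : forall xs l, evalL (map MProj l) xs (map (fun i => nth i xs 0) l).
Proof. induction l; simpl; constructor; auto. constructor. Qed.

Theorem eval_compile : forall e xs, eval (compile e) xs (den e (fun i => nth i xs 0)).
Proof.
  induction e; intros xs; simpl.
  - constructor.
  - econstructor. constructor. apply IHe. constructor. constructor.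
  - constructor.
  - set (N := max (var_bound e2) (var_bound e3 - 2)).
    set (envl := map (fun i => nth i xs 0) (seq 0 N)).
    econstructor.
    + constructor. apply IHe1. apply evalL_proj.
    + assert (Hagree : forall i, i < N -> nth i envl 0 = nth i xs 0).
      { intros i Hi. unfold envl. apply (nth_map_seq (fun j => nth j xs 0)); auto. }
      generalize (den e1 (fun i => nth i xs 0)). intro n.
      induction n; simpl.
      * constructor. rewrite (den_ext e2 (fun i => nth i xs 0) (fun i => nth i envl 0)).
        apply IHe2. intros i Hi. symmetry. apply Hagree. unfold N; lia.
      * econstructor. apply IHn.
        rewrite (den_ext e3 _ (fun i => nth i (n :: primrec (den e2 (fun i0 => nth i0 xs 0))
           (fun m acc => den e3 (scons m (scons acc (fun i0 => nth i0 xs 0)))) n :: envl) 0)).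
        apply IHe3.
        intros [|[|i]] Hi; simpl; auto. symmetry; apply Hagree. unfold N; lia.
Qed.

Definition up2 (r : nat -> nat) (i : nat) : nat :=
  match i with 0 => 0 | 1 => 1 | S (S j) => S (S (r j)) end.

Fixpoint ren (r : nat -> nat) (e : pexp) : pexp :=
  match e with
  | EZ => EZ | ES a => ES (ren r a) | EV i => EV (r i)
  | ER n g h => ER (ren r n) (ren r g) (ren (up2 r) h)
  end.

Lemma den_ren : forall e r env, den (ren r e) env = den e (fun i => env (r i)).
Proof.
  induction e; intros r env; simpl; auto.
  rewrite IHe1, IHe2. apply primrec_ext. intros m a. rewrite IHe3.
  apply den_ext_all. intros [|[|i]]; reflexivity.
Qed.

Definition lift (k : nat) (e : pexp) : pexp := ren (fun i => k + i) e.
Definition skip1 (i : nat) : nat := match i with 0 => 0 | S j => S (S j) end.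
Definition letr (i : nat) : nat := match i with 0 => 1 | S j => S (S j) end.

Lemma den_lift1 : forall e m env, den (lift 1 e) (scons m env) = den e env.
Proof. intros. unfold lift. rewrite den_ren. apply den_ext_all. reflexivity. Qed.
Lemma den_lift2 : forall e m a env, den (lift 2 e) (scons m (scons a env)) = den e env.
Proof. intros. unfold lift. rewrite den_ren. apply den_ext_all. reflexivity. Qed.
Lemma den_skip1 : forall e m a env, den (ren skip1 e) (scons m (scons a env)) = den e (scons m env).
Proof. intros. rewrite den_ren. apply den_ext_all. intros [|i]; reflexivity. Qed.
Lemma den_letr : forall e m a env, den (ren letr e) (scons m (scons a env)) = den e (scons a env).
Proof. intros. rewrite den_ren. apply den_ext_all. intros [|i]; reflexivity. Qed.

Definition b2n (b : bool) : nat := if b then 1 else 0.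
Definition n2b (n : nat) : bool := negb (n =? 0).

Fixpoint bsum (f : nat -> nat) (n : nat) : nat :=
  match n with 0 => 0 | S m => bsum f m + f m end.

(** * Arithmetic and logical macros *)

(* Each macro is made opaque right after its denotation lemma, so that later proofs rewrite
   with that lemma instead of unfolding the macro. *)
Definition eadd a b := ER a b (ES (EV 1)).
Lemma den_eadd : forall a b env, den (eadd a b) env = den a env + den b env.
Proof. intros; unfold eadd; simpl. induction (den a env); simpl; auto. Qed.
Global Opaque eadd.

Definition epred a := ER a EZ (EV 0).
Lemma den_epred : forall a env, den (epred a) env = Nat.pred (den a env).
Proof. intros; unfold epred; simpl. destruct (den a env); simpl; auto. Qed.
Global Opaque epred.

Definition esub a b := ER b a (epred (EV 1)).
Lemma den_esub : forall a b env, den (esub a b) env = den a env - den b env.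
Proof.
  intros; unfold esub; simpl. induction (den b env); simpl. lia.
  rewrite den_epred. simpl. rewrite IHn. lia.
Qed.
Global Opaque esub.

Definition emul a b := ER a EZ (eadd (EV 1) (lift 2 b)).
Lemma den_emul : forall a b env, den (emul a b) env = den a env * den b env.
Proof.
  intros; unfold emul; simpl. induction (den a env); simpl; auto.
  rewrite den_eadd, den_lift2. simpl. rewrite IHn. lia.
Qed.
Global Opaque emul.

Definition eif c a b := ER c b (lift 2 a).
Lemma den_eif : forall c a b env,
  den (eif c a b) env = if den c env =? 0 then den b env else den a env.
Proof.
  intros; unfold eif; simpl. destruct (den c env); simpl; auto. apply den_lift2.
Qed.
Global Opaque eif.

Definition eisz a := eif a EZ (ES EZ).
Lemma den_eisz : forall a env, den (eisz a) env = b2n (den a env =? 0).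
Proof. intros; unfold eisz. unfold eisz. rewrite den_eif. destruct (den a env); reflexivity. Qed.
Global Opaque eisz.

Definition eeq a b := eisz (eadd (esub a b) (esub b a)).
Lemma den_eeq : forall a b env, den (eeq a b) env = b2n (den a env =? den b env).
Proof.
  intros; unfold eeq. unfold eeq. rewrite den_eisz, den_eadd, !den_esub.
  destruct (Nat.eqb_spec (den a env) (den b env));
  destruct (Nat.eqb_spec (den a env - den b env + (den b env - den a env)) 0); auto; lia.
Qed.
Global Opaque eeq.

Definition ele a b := eisz (esub a b).
Lemma den_ele : forall a b env, den (ele a b) env = b2n (den a env <=? den b env).
Proof.
  intros; unfold ele. unfold ele. rewrite den_eisz, den_esub.
  destruct (Nat.leb_spec (den a env) (den b env));
  destruct (Nat.eqb_spec (den a env - den b env) 0); auto; lia.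
Qed.
Global Opaque ele.

Definition eand a b := eif a (eif b (ES EZ) EZ) EZ.
Lemma den_eand : forall a b env, den (eand a b) env = b2n (n2b (den a env) && n2b (den b env)).
Proof.
  intros; unfold eand. unfold eand. rewrite !den_eif. unfold n2b.
  destruct (den a env); destruct (den b env); reflexivity.
Qed.
Global Opaque eand.
Definition eor a b := eif a (ES EZ) (eif b (ES EZ) EZ).
Lemma den_eor : forall a b env, den (eor a b) env = b2n (n2b (den a env) || n2b (den b env)).
Proof.
  intros; unfold eor. unfold eor. rewrite !den_eif. unfold n2b.
  destruct (den a env); destruct (den b env); reflexivity.
Qed.
Global Opaque eor.
Definition enot a := eisz a.
Lemma den_enot : forall a env, den (enot a) env = b2n (negb (n2b (den a env))).
Proof. intros; unfold enot. unfold enot. rewrite den_eisz. unfold n2b. destruct (den a env); reflexivity. Qed.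
Global Opaque enot.

Definition esum n body := ER n EZ (eadd (EV 1) (ren skip1 body)).
Lemma den_esum : forall n body env,
  den (esum n body) env = bsum (fun i => den body (scons i env)) (den n env).
Proof.
  intros; unfold esum; simpl. induction (den n env); simpl; auto.
  rewrite den_eadd, den_skip1. simpl. rewrite IHn0. auto.
Qed.
Global Opaque esum.

Definition elet x body := ER (ES EZ) x (ren letr body).
Lemma den_elet : forall x body env, den (elet x body) env = den body (scons (den x env) env).
Proof. intros; unfold elet; simpl. apply den_letr. Qed.
Global Opaque elet.

Fixpoint bex (f : nat -> bool) (n : nat) : bool :=
  match n with 0 => false | S m => bex f m || f m end.
Fixpoint ball (f : nat -> bool) (n : nat) : bool :=
  match n with 0 => true | S m => ball f m && f m end.

Lemma bex_spec : forall f n, bex f n = true <-> exists i, i < n /\ f i = true.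
Proof.
  induction n; simpl. split; [discriminate| intros [i [Hi _]]; lia].
  rewrite Bool.orb_true_iff, IHn. split.
  - intros [[i [Hi Hf]]|Hf]; [exists i; split; auto; lia | exists n; auto].
  - intros [i [Hi Hf]]. destruct (Nat.eq_dec i n). subst; auto. left; exists i; split; auto; lia.
Qed.
Lemma ball_spec : forall f n, ball f n = true <-> forall i, i < n -> f i = true.
Proof.
  induction n; simpl. split; auto; intros; lia.
  rewrite Bool.andb_true_iff, IHn. split.
  - intros [H1 H2] i Hi. destruct (Nat.eq_dec i n). subst; auto. apply H1; lia.
  - intros H; split; auto.
Qed.

Lemma bsum_pos : forall f n, bsum f n <> 0 <-> exists i, i < n /\ f i <> 0.
Proof.
  induction n; simpl. split; [tauto| intros [i [Hi _]]; lia].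
  split.
  - intros H. destruct (f n) eqn:E. rewrite Nat.add_0_r in H. apply IHn in H.
    destruct H as [i [Hi Hf]]; exists i; split; auto; lia.
    exists n; split; auto; lia.
  - intros [i [Hi Hf]]. destruct (Nat.eq_dec i n). subst; lia.
    assert (bsum f n <> 0) by (apply IHn; exists i; split; auto; lia). lia.
Qed.

Definition eex n body := eif (esum n (eif body (ES EZ) EZ)) (ES EZ) EZ.
Lemma den_eex : forall n body env,
  den (eex n body) env = b2n (bex (fun i => n2b (den body (scons i env))) (den n env)).
Proof.
  intros; unfold eex. unfold eex. rewrite den_eif, den_esum.
  destruct (bex (fun i => n2b (den body (scons i env))) (den n env)) eqn:E.
  - apply bex_spec in E. destruct E as [i [Hi Hf]].
    assert (bsum (fun i0 => den (eif body (ES EZ) EZ) (scons i0 env)) (den n env) <> 0).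
    { apply bsum_pos. exists i; split; auto. rewrite den_eif. unfold n2b in Hf.
      destruct (den body (scons i env)); simpl in *; auto; discriminate. }
    destruct (Nat.eqb_spec (bsum (fun i0 => den (eif body (ES EZ) EZ) (scons i0 env)) (den n env)) 0); auto; lia.
  - destruct (Nat.eqb_spec (bsum (fun i0 => den (eif body (ES EZ) EZ) (scons i0 env)) (den n env)) 0); auto.
    apply bsum_pos in n0. destruct n0 as [i [Hi Hf]].
    assert (bex (fun i => n2b (den body (scons i env))) (den n env) = true).
    { apply bex_spec. exists i; split; auto. rewrite den_eif in Hf. unfold n2b.
      destruct (den body (scons i env)); simpl in *; auto. }
    congruence.
Qed.
Global Opaque eex.

Definition eall n body := enot (eex n (enot body)).
Lemma den_eall : forall n body env,
  den (eall n body) env = b2n (ball (fun i => n2b (den body (scons i env))) (den n env)).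
Proof.
  intros; unfold eall. unfold eall. rewrite den_enot, den_eex.
  destruct (ball (fun i => n2b (den body (scons i env))) (den n env)) eqn:E.
  - rewrite ball_spec in E.
    destruct (bex _ _) eqn:E2; auto. apply bex_spec in E2. destruct E2 as [i [Hi Hf]].
    specialize (E i Hi). rewrite den_enot in Hf. simpl in Hf.
    destruct (n2b (den body (scons i env))); simpl in *; discriminate.
  - destruct (bex _ _) eqn:E2; auto. exfalso.
    assert (ball (fun i => n2b (den body (scons i env))) (den n env) = true); [|congruence].
    apply ball_spec. intros i Hi.
    destruct (n2b (den body (scons i env))) eqn:E3; auto. exfalso.
    assert (bex (fun i0 => n2b (den (enot body) (scons i0 env))) (den n env) = true); [|congruence].
    apply bex_spec. exists i; split; auto. rewrite den_enot, E3. reflexivity.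
Qed.
Global Opaque eall.

(** * Cantor pairing and codes of lists *)

Fixpoint tri (k : nat) : nat := match k with 0 => 0 | S m => tri m + S m end.

Lemma tri_double : forall k, 2 * tri k = k * (k + 1).
Proof. induction k; simpl tri; [reflexivity|]. rewrite Nat.mul_add_distr_l, IHk. lia. Qed.

Lemma cpair_tri : forall x y, cpair x y = tri (x + y) + y.
Proof.
  intros. unfold cpair. f_equal. rewrite <- tri_double.
  rewrite Nat.mul_comm. apply Nat.div_mul. lia.
Qed.

Lemma tri_ge : forall k, k <= tri k.
Proof. induction k; simpl; lia. Qed.

Lemma tri_mono : forall a b, a <= b -> tri a <= tri b.
Proof. intros a b H; induction H; simpl; lia. Qed.

Lemma tri_uniq : forall a b z, tri a <= z < tri (S a) -> tri b <= z < tri (S b) -> a = b.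
Proof.
  intros a b z Ha Hb.
  destruct (Nat.lt_trichotomy a b) as [H|[H|H]]; auto.
  - assert (tri (S a) <= tri b) by (apply tri_mono; lia). lia.
  - assert (tri (S b) <= tri a) by (apply tri_mono; lia). lia.
Qed.

Fixpoint tri_root (z : nat) : nat :=
  match z with 0 => 0 | S m => if tri (S (tri_root m)) <=? S m then S (tri_root m) else tri_root m end.

Lemma tri_root_spec : forall z, tri (tri_root z) <= z < tri (S (tri_root z)).
Proof.
  induction z. simpl; lia.
  change (tri_root (S z)) with (if tri (S (tri_root z)) <=? S z then S (tri_root z) else tri_root z).
  destruct (Nat.leb_spec (tri (S (tri_root z))) (S z)) as [H|H].
  - change (tri (S (S (tri_root z)))) with (tri (S (tri_root z)) + S (S (tri_root z))). lia.
  - lia.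
Qed.

Definition unpair2 (z : nat) : nat := z - tri (tri_root z).
Definition unpair1 (z : nat) : nat := tri_root z - unpair2 z.

Lemma unpair_cpair : forall x y, unpair1 (cpair x y) = x /\ unpair2 (cpair x y) = y.
Proof.
  intros. rewrite cpair_tri.
  assert (tri_root (tri (x + y) + y) = x + y).
  { apply (tri_uniq _ _ (tri (x + y) + y)). apply tri_root_spec. simpl. lia. }
  unfold unpair1, unpair2. rewrite H. lia.
Qed.
Lemma unpair1_cpair : forall x y, unpair1 (cpair x y) = x. Proof. apply unpair_cpair. Qed.
Lemma unpair2_cpair : forall x y, unpair2 (cpair x y) = y. Proof. apply unpair_cpair. Qed.

Lemma cpair_unpair : forall z, cpair (unpair1 z) (unpair2 z) = z.
Proof.
  intros. rewrite cpair_tri. pose proof (tri_root_spec z). simpl in H.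
  unfold unpair1, unpair2. replace (tri_root z - (z - tri (tri_root z)) + (z - tri (tri_root z))) with (tri_root z) by lia.
  lia.
Qed.

Lemma cpair_ge1 : forall x y, x <= cpair x y.
Proof. intros. rewrite cpair_tri. pose proof (tri_ge (x+y)). lia. Qed.
Lemma cpair_ge2 : forall x y, y <= cpair x y.
Proof. intros. rewrite cpair_tri. lia. Qed.
Lemma cpair_inj : forall x y x' y', cpair x y = cpair x' y' -> x = x' /\ y = y'.
Proof.
  intros. split.
  - rewrite <- (unpair1_cpair x y), <- (unpair1_cpair x' y'). congruence.
  - rewrite <- (unpair2_cpair x y), <- (unpair2_cpair x' y'). congruence.
Qed.
Lemma unpair2_le : forall z, unpair2 z <= z.
Proof. intros. rewrite <- (cpair_unpair z) at 2. apply cpair_ge2. Qed.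

Definition etri a := ER a EZ (eadd (EV 1) (ES (EV 0))).
Lemma den_etri : forall a env, den (etri a) env = tri (den a env).
Proof.
  intros; unfold etri; simpl. induction (den a env); simpl; auto.
  rewrite den_eadd. simpl. rewrite IHn. lia.
Qed.
Global Opaque etri.

Definition ecpair a b := eadd (etri (eadd a b)) b.
Lemma den_ecpair : forall a b env, den (ecpair a b) env = cpair (den a env) (den b env).
Proof. intros; unfold ecpair. rewrite den_eadd, den_etri, den_eadd, cpair_tri. reflexivity. Qed.
Global Opaque ecpair.

Definition etri_root a := ER a EZ (eif (ele (etri (ES (EV 1))) (ES (EV 0))) (ES (EV 1)) (EV 1)).
Lemma den_etri_root : forall a env, den (etri_root a) env = tri_root (den a env).
Proof.
  intros; unfold etri_root; simpl. induction (den a env); simpl; auto.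
  rewrite den_eif, den_ele, den_etri. simpl. rewrite IHn.
  change (tri (S (tri_root n))) with (tri (tri_root n) + S (tri_root n)).
  destruct (tri (tri_root n) + S (tri_root n) <=? S n); reflexivity.
Qed.
Global Opaque etri_root.

Definition eunpair2 a := esub a (etri (etri_root a)).
Lemma den_eunpair2 : forall a env, den (eunpair2 a) env = unpair2 (den a env).
Proof. intros; unfold eunpair2. rewrite den_esub, den_etri, den_etri_root. reflexivity. Qed.
Global Opaque eunpair2.
Definition eunpair1 a := esub (etri_root a) (eunpair2 a).
Lemma den_eunpair1 : forall a env, den (eunpair1 a) env = unpair1 (den a env).
Proof. intros; unfold eunpair1. rewrite den_esub, den_eunpair2, den_etri_root. reflexivity. Qed.
Global Opaque eunpair1.

Fixpoint enc_nats (l : list nat) : nat :=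
  match l with [] => 0 | x :: r => S (cpair x (enc_nats r)) end.

Fixpoint dec_nats_fuel (f c : nat) : list nat :=
  match f with 0 => [] | S f' => match c with 0 => [] | S c' => unpair1 c' :: dec_nats_fuel f' (unpair2 c') end end.
Definition dec_nats (c : nat) : list nat := dec_nats_fuel c c.

Lemma enc_dec_nats_fuel : forall f c, c <= f -> enc_nats (dec_nats_fuel f c) = c.
Proof.
  induction f; intros c Hc; simpl. lia.
  destruct c; simpl; auto. rewrite IHf. rewrite cpair_unpair. auto.
  pose proof (unpair2_le c). lia.
Qed.
Lemma dec_enc_nats_fuel : forall l f, enc_nats l <= f -> dec_nats_fuel f (enc_nats l) = l.
Proof.
  induction l; intros f Hf; destruct f; simpl in *; auto; try lia.
  rewrite unpair1_cpair, unpair2_cpair. rewrite IHl; auto.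
  pose proof (cpair_ge2 a (enc_nats l)). lia.
Qed.
Lemma enc_dec_nats : forall c, enc_nats (dec_nats c) = c.
Proof. intros; apply enc_dec_nats_fuel; auto. Qed.
Lemma dec_enc_nats : forall l, dec_nats (enc_nats l) = l.
Proof. intros; apply dec_enc_nats_fuel; auto. Qed.
Lemma enc_nats_inj : forall l l', enc_nats l = enc_nats l' -> l = l'.
Proof. intros. rewrite <- (dec_enc_nats l), <- (dec_enc_nats l'). congruence. Qed.
Lemma dec_nats_cons : forall x c, dec_nats (S (cpair x c)) = x :: dec_nats c.
Proof.
  intros. rewrite <- (enc_dec_nats c) at 1.
  change (S (cpair x (enc_nats (dec_nats c)))) with (enc_nats (x :: dec_nats c)). apply dec_enc_nats.
Qed.
Lemma dec_nats_S : forall c, dec_nats (S c) = unpair1 c :: dec_nats (unpair2 c).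
Proof. intros. rewrite <- (cpair_unpair c) at 1. apply dec_nats_cons. Qed.
Global Opaque dec_nats.

Lemma length_le_enc_nats : forall l, length l <= enc_nats l.
Proof. induction l; simpl; auto. pose proof (cpair_ge2 a (enc_nats l)). lia. Qed.
Lemma in_lt_enc_nats : forall l x, In x l -> x < enc_nats l.
Proof.
  induction l; simpl; intros x H; [tauto|]. destruct H.
  subst. pose proof (cpair_ge1 x (enc_nats l)). lia.
  apply IHl in H. pose proof (cpair_ge2 a (enc_nats l)). lia.
Qed.
Lemma in_dec_nats_lt : forall c x, In x (dec_nats c) -> x < c.
Proof. intros. rewrite <- (enc_dec_nats c). apply in_lt_enc_nats; auto. Qed.

Definition ehd c := eunpair1 (epred c).
Definition etl c := eunpair2 (epred c).
Lemma den_ehd : forall c env, den (ehd c) env = hd 0 (dec_nats (den c env)).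
Proof.
  intros; unfold ehd. rewrite den_eunpair1, den_epred.
  destruct (den c env); simpl. reflexivity. rewrite dec_nats_S. reflexivity.
Qed.
Lemma den_etl : forall c env, den (etl c) env = enc_nats (tl (dec_nats (den c env))).
Proof.
  intros; unfold etl. rewrite den_eunpair2, den_epred.
  destruct (den c env); simpl. reflexivity. rewrite dec_nats_S. simpl. rewrite enc_dec_nats. reflexivity.
Qed.
Global Opaque ehd etl.

Definition econs x l := ES (ecpair x l).
Lemma den_econs : forall x l env, den (econs x l) env = S (cpair (den x env) (den l env)).
Proof. intros; unfold econs; simpl. rewrite den_ecpair. reflexivity. Qed.
Global Opaque econs.

Definition edrop n l := ER n l (etl (EV 1)).
Lemma den_edrop : forall n l env, den (edrop n l) env = enc_nats (skipn (den n env) (dec_nats (den l env))).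
Proof.
  intros; unfold edrop; simpl. induction (den n env); simpl.
  - rewrite enc_dec_nats. reflexivity.
  - rewrite den_etl. simpl. rewrite IHn0, dec_enc_nats.
    generalize (dec_nats (den l env)). clear. induction n0; intros [|a l]; simpl; auto.
Qed.
Global Opaque edrop.

Lemma nth_hd_skipn : forall (L : list nat) n, nth n L 0 = hd 0 (skipn n L).
Proof. induction L; destruct n; simpl; auto. Qed.

Definition enth n l := ehd (edrop n l).
Lemma den_enth : forall n l env, den (enth n l) env = nth (den n env) (dec_nats (den l env)) 0.
Proof. intros; unfold enth. rewrite den_ehd, den_edrop, dec_enc_nats, nth_hd_skipn. reflexivity. Qed.
Global Opaque enth.

Lemma bsum_ind : forall m c, bsum (fun i => b2n (i <? m)) c = Nat.min c m.
Proof.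
  induction c; cbn [bsum]; auto. rewrite IHc.
  destruct (Nat.ltb_spec c m); unfold b2n; lia.
Qed.

Lemma bsum_ext : forall f g n, (forall i, i < n -> f i = g i) -> bsum f n = bsum g n.
Proof. induction n; simpl; intros; auto. rewrite IHn, H; auto. Qed.

Definition elen l := esum l (eif (edrop (EV 0) (lift 1 l)) (ES EZ) EZ).
Lemma den_elen : forall l env, den (elen l) env = length (dec_nats (den l env)).
Proof.
  intros; unfold elen. rewrite den_esum.
  rewrite (bsum_ext _ (fun i => b2n (i <? length (dec_nats (den l env))))).
  - rewrite bsum_ind. pose proof (length_le_enc_nats (dec_nats (den l env))). rewrite enc_dec_nats in H. lia.
  - intros i _. rewrite den_eif, den_edrop, den_lift1. simpl.
    destruct (Nat.ltb_spec i (length (dec_nats (den l env)))).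
    + destruct (skipn i (dec_nats (den l env))) eqn:E; simpl; auto.
      apply (f_equal (@length nat)) in E. rewrite length_skipn in E. simpl in E; lia.
    + rewrite skipn_all2 by lia. reflexivity.
Qed.
Global Opaque elen.

Lemma bex_nth : forall f L, bex (fun i => f (nth i L 0)) (length L) = existsb f L.
Proof.
  intros. apply eq_true_iff_eq. rewrite bex_spec, existsb_exists. split.
  - intros [i [Hi Hf]]. exists (nth i L 0). split; auto. apply nth_In; auto.
  - intros [x [Hx Hf]]. apply In_nth with (d := 0) in Hx. destruct Hx as [i [Hi Hn]].
    exists i. subst; auto.
Qed.
Lemma ball_nth : forall f L, ball (fun i => f (nth i L 0)) (length L) = forallb f L.
Proof.
  intros. apply eq_true_iff_eq. rewrite ball_spec, forallb_forall. split.
  - intros H x Hx. apply In_nth with (d := 0) in Hx. destruct Hx as [i [Hi Hn]]. subst; auto.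
  - intros H i Hi. apply H. apply nth_In; auto.
Qed.
Lemma bex_ext : forall f g n, (forall i, i < n -> f i = g i) -> bex f n = bex g n.
Proof. induction n; simpl; intros; auto. rewrite IHn, H; auto. Qed.
Lemma ball_ext : forall f g n, (forall i, i < n -> f i = g i) -> ball f n = ball g n.
Proof. induction n; simpl; intros; auto. rewrite IHn, H; auto. Qed.

Definition emem x l := eex (elen l) (eeq (enth (EV 0) (lift 1 l)) (lift 1 x)).
Lemma den_emem : forall x l env,
  den (emem x l) env = b2n (existsb (fun y => y =? den x env) (dec_nats (den l env))).
Proof.
  intros; unfold emem. rewrite den_eex, den_elen. f_equal.
  rewrite <- bex_nth. apply bex_ext. intros i _.
  rewrite den_eeq, den_enth, !den_lift1. simpl. unfold n2b, b2n.
  destruct (nth i (dec_nats (den l env)) 0 =? den x env); reflexivity.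
Qed.
Global Opaque emem.

Definition eexl l body := eex (elen l) (elet (enth (EV 0) (lift 1 l)) (ren skip1 body)).
Lemma den_eexl : forall l body env,
  den (eexl l body) env = b2n (existsb (fun y => n2b (den body (scons y env))) (dec_nats (den l env))).
Proof.
  intros; unfold eexl. rewrite den_eex, den_elen. f_equal.
  rewrite <- bex_nth. apply bex_ext. intros i _.
  rewrite den_elet, den_enth, den_lift1, den_skip1. reflexivity.
Qed.
Global Opaque eexl.

Definition eallL l body := eall (elen l) (elet (enth (EV 0) (lift 1 l)) (ren skip1 body)).
Lemma den_eallL : forall l body env,
  den (eallL l body) env = b2n (forallb (fun y => n2b (den body (scons y env))) (dec_nats (den l env))).
Proof.
  intros; unfold eallL. rewrite den_eall, den_elen. f_equal.
  rewrite <- ball_nth. apply ball_ext. intros i _.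
  rewrite den_elet, den_enth, den_lift1, den_skip1. reflexivity.
Qed.
Global Opaque eallL.

Definition skip3 (i : nat) : nat := match i with 0 => 0 | S j => S (S (S j)) end.
Lemma den_skip3 : forall f x m a env, den (ren skip3 f) (scons x (scons m (scons a env))) = den f (scons x env).
Proof. intros. rewrite den_ren. apply den_ext_all. intros [|i]; reflexivity. Qed.

Lemma skipn_nth_cons : forall (L : list nat) i, i < length L -> skipn i L = nth i L 0 :: skipn (S i) L.
Proof. induction L; intros [|i] H; simpl in *; try lia; auto. apply IHL; lia. Qed.

Definition erev_index (l : pexp) := esub (esub (elen l) (ES EZ)) (EV 0).

Definition emap f l :=
  ER (elen l) EZ (econs (elet (enth (erev_index (lift 2 l)) (lift 2 l)) (ren skip3 f)) (EV 1)).
Lemma den_emap : forall f l env,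
  den (emap f l) env = enc_nats (map (fun y => den f (scons y env)) (dec_nats (den l env))).
Proof.
  intros; unfold emap; simpl. rewrite den_elen. set (L := dec_nats (den l env)).
  set (F := fun y => den f (scons y env)).
  assert (forall m, m <= length L -> primrec 0 (fun m0 acc => den (econs (elet (enth (erev_index (lift 2 l)) (lift 2 l)) (ren skip3 f)) (EV 1))
      (scons m0 (scons acc env))) m = enc_nats (map F (skipn (length L - m) L))).
  { induction m; intros Hm; simpl.
    - rewrite skipn_all2 by lia. reflexivity.
    - rewrite IHm by lia. rewrite den_econs, den_elet, den_skip3, den_enth. unfold erev_index.
      rewrite !den_esub, den_elen, !den_lift2. simpl. fold L.
      rewrite (skipn_nth_cons L (length L - S m)) by lia.
      replace (S (length L - S m)) with (length L - m) by lia.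
      replace (length L - 1 - m) with (length L - S m) by lia. reflexivity. }
  rewrite H by lia. rewrite Nat.sub_diag. reflexivity.
Qed.
Global Opaque emap.

Definition efilter f l :=
  ER (elen l) EZ (elet (enth (erev_index (lift 2 l)) (lift 2 l)) (eif (ren skip3 f) (econs (EV 0) (EV 2)) (EV 2))).
Lemma den_efilter : forall f l env,
  den (efilter f l) env = enc_nats (filter (fun y => n2b (den f (scons y env))) (dec_nats (den l env))).
Proof.
  intros; unfold efilter; simpl. rewrite den_elen. set (L := dec_nats (den l env)).
  set (F := fun y => n2b (den f (scons y env))).
  assert (forall m, m <= length L -> primrec 0 (fun m0 acc => den (elet (enth (erev_index (lift 2 l)) (lift 2 l)) (eif (ren skip3 f) (econs (EV 0) (EV 2)) (EV 2)))
      (scons m0 (scons acc env))) m = enc_nats (filter F (skipn (length L - m) L))).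
  { induction m; intros Hm; simpl.
    - rewrite skipn_all2 by lia. reflexivity.
    - rewrite IHm by lia. rewrite den_elet, den_eif, den_skip3, den_enth. unfold erev_index.
      rewrite !den_esub, den_elen, !den_lift2. simpl. fold L.
      rewrite (skipn_nth_cons L (length L - S m)) by lia.
      replace (S (length L - S m)) with (length L - m) by lia.
      replace (length L - 1 - m) with (length L - S m) by lia. simpl.
      unfold F. unfold n2b.
      destruct (den f (scons (nth (length L - S m) L 0) env) =? 0); simpl.
      + reflexivity.
      + rewrite den_econs. simpl. reflexivity. }
  rewrite H by lia. rewrite Nat.sub_diag. reflexivity.
Qed.
Global Opaque efilter.

Definition eapp a b := ER (elen a) b (econs (enth (erev_index (lift 2 a)) (lift 2 a)) (EV 1)).
Lemma den_eapp : forall a b env,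
  den (eapp a b) env = enc_nats (dec_nats (den a env) ++ dec_nats (den b env)).
Proof.
  intros; unfold eapp; simpl. rewrite den_elen. set (L := dec_nats (den a env)).
  assert (forall m, m <= length L -> primrec (den b env) (fun m0 acc => den (econs (enth (erev_index (lift 2 a)) (lift 2 a)) (EV 1))
      (scons m0 (scons acc env))) m = enc_nats (skipn (length L - m) L ++ dec_nats (den b env))).
  { induction m; intros Hm; simpl.
    - rewrite skipn_all2 by lia. simpl. rewrite enc_dec_nats. reflexivity.
    - rewrite IHm by lia. rewrite den_econs, den_enth. unfold erev_index.
      rewrite !den_esub, den_elen, !den_lift2. simpl. fold L.
      rewrite (skipn_nth_cons L (length L - S m)) by lia.
      replace (S (length L - S m)) with (length L - m) by lia.
      replace (length L - 1 - m) with (length L - S m) by lia. reflexivity. }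
  rewrite H by lia. rewrite Nat.sub_diag. reflexivity.
Qed.
Global Opaque eapp.

Definition eflat ll := ER (elen ll) EZ (eapp (enth (erev_index (lift 2 ll)) (lift 2 ll)) (EV 1)).
Lemma den_eflat : forall ll env,
  den (eflat ll) env = enc_nats (concat (map dec_nats (dec_nats (den ll env)))).
Proof.
  intros; unfold eflat; simpl. rewrite den_elen. set (L := dec_nats (den ll env)).
  assert (forall m, m <= length L -> primrec 0 (fun m0 acc => den (eapp (enth (erev_index (lift 2 ll)) (lift 2 ll)) (EV 1))
      (scons m0 (scons acc env))) m = enc_nats (concat (map dec_nats (skipn (length L - m) L)))).
  { induction m; intros Hm; simpl.
    - rewrite skipn_all2 by lia. reflexivity.
    - rewrite IHm by lia. rewrite den_eapp, den_enth. unfold erev_index.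
      rewrite !den_esub, den_elen, !den_lift2. simpl. fold L.
      rewrite (skipn_nth_cons L (length L - S m)) by lia.
      replace (S (length L - S m)) with (length L - m) by lia.
      replace (length L - 1 - m) with (length L - S m) by lia. simpl.
      rewrite dec_enc_nats. reflexivity. }
  rewrite H by lia. rewrite Nat.sub_diag. reflexivity.
Qed.
Global Opaque eflat.

Definition eseqr n := ER n EZ (econs (EV 0) (EV 1)).
Lemma den_eseqr : forall n env, den (eseqr n) env = enc_nats (rev (seq 0 (den n env))).
Proof.
  intros; unfold eseqr; cbn [den]. induction (den n env); cbn [primrec]; auto.
  rewrite den_econs. cbn [den scons]. rewrite IHn0. rewrite (seq_S n0 0), rev_app_distr. reflexivity.
Qed.
Global Opaque eseqr.

Definition epow a b := ER b (ES EZ) (emul (EV 1) (lift 2 a)).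
Lemma den_epow : forall a b env, den (epow a b) env = den a env ^ den b env.
Proof.
  intros; unfold epow; simpl. induction (den b env); simpl; auto.
  rewrite den_emul, den_lift2. simpl. rewrite IHn. lia.
Qed.
Global Opaque epow.

(* What [ediv] computes: dividing by 0 leaves the dividend unchanged. *)
Definition div_or_self (a d : nat) : nat := if d =? 0 then a else a / d.
Definition ediv a d := esum a (ele (emul (ES (EV 0)) (lift 1 d)) (lift 1 a)).
Lemma den_ediv : forall a d env, den (ediv a d) env = div_or_self (den a env) (den d env).
Proof.
  intros; unfold ediv, div_or_self. rewrite den_esum.
  destruct (Nat.eqb_spec (den d env) 0) as [Hd|Hd].
  - rewrite (bsum_ext _ (fun i => b2n (i <? den a env))). rewrite bsum_ind. lia.
    intros i Hi. rewrite den_ele, den_emul, !den_lift1. simpl. rewrite Hd.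
    destruct (Nat.ltb_spec i (den a env)); [|lia]. rewrite Nat.mul_0_r. reflexivity.
  - rewrite (bsum_ext _ (fun i => b2n (i <? den a env / den d env))).
    + rewrite bsum_ind. pose proof (Nat.Div0.div_le_upper_bound (den a env) (den d env) (den a env)). nia.
    + intros i _. rewrite den_ele, den_emul, !den_lift1. simpl.
      destruct (Nat.ltb_spec i (den a env / den d env));
      destruct (Nat.leb_spec (den d env + i * den d env) (den a env)); auto; exfalso.
      * assert (S i * den d env <= den d env * (den a env / den d env)) by nia.
        pose proof (Nat.Div0.mul_div_le (den a env) (den d env)). nia.
      * assert (S i <= den a env / den d env). apply Nat.div_le_lower_bound; lia. lia.
Qed.
Global Opaque ediv.

Definition emod a d := esub a (emul d (ediv a d)).
Lemma den_emod : forall a d env, den (emod a d) env = den a env mod den d env.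
Proof.
  intros; unfold emod. rewrite den_esub, den_emul, den_ediv. unfold div_or_self.
  destruct (Nat.eqb_spec (den d env) 0) as [Hd|Hd]. rewrite Hd. simpl. lia.
  rewrite (Nat.div_mod_eq (den a env) (den d env)) at 1. lia.
Qed.
Global Opaque emod.

(* The table for [m] codes the list of values at [m - 1], ..., [0], most recent first. *)
Definition cov_table (st : nat -> nat -> nat) (m : nat) : nat :=
  primrec 0 (fun m t => S (cpair (st m t) t)) m.
Definition cov_rec (st : nat -> nat -> nat) (c : nat) : nat := st c (cov_table st c).

Definition ecov step c := ehd (ER (ES c) EZ (econs step (EV 1))).
Lemma den_ecov : forall step c env,
  den (ecov step c) env = cov_rec (fun m t => den step (scons m (scons t env))) (den c env).
Proof.
  intros; unfold ecov. rewrite den_ehd. simpl. rewrite den_econs. simpl.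
  rewrite dec_nats_cons. simpl. unfold cov_rec, cov_table.
  rewrite (primrec_ext 0 _ (fun m t => S (cpair (den step (scons m (scons t env))) t))).
  reflexivity. intros. rewrite den_econs. reflexivity.
Qed.
Global Opaque ecov.

Lemma nth_cov_table : forall st m j, j < m -> nth (m - 1 - j) (dec_nats (cov_table st m)) 0 = cov_rec st j.
Proof.
  induction m; intros j Hj. lia.
  change (cov_table st (S m)) with (S (cpair (st m (cov_table st m)) (cov_table st m))).
  rewrite dec_nats_cons. destruct (Nat.eq_dec j m).
  - subst. replace (S m - 1 - m) with 0 by lia. reflexivity.
  - replace (S m - 1 - j) with (S (m - 1 - j)) by lia. simpl. apply IHm. lia.
Qed.

(* These instances let [simpl_den] rewrite under the binders of the list combinators. *)
#[global] Instance existsb_pr {X} : Proper (pointwise_relation X eq ==> eq ==> eq) (@existsb X).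
Proof. intros f g H l l' <-. rewrite (functional_extensionality f g H). reflexivity. Qed.
#[global] Instance forallb_pr {X} : Proper (pointwise_relation X eq ==> eq ==> eq) (@forallb X).
Proof. intros f g H l l' <-. rewrite (functional_extensionality f g H). reflexivity. Qed.
#[global] Instance filter_pr {X} : Proper (pointwise_relation X eq ==> eq ==> eq) (@filter X).
Proof. intros f g H l l' <-. rewrite (functional_extensionality f g H). reflexivity. Qed.
#[global] Instance map_pr {X Y} : Proper (pointwise_relation X eq ==> eq ==> eq) (@map X Y).
Proof. intros f g H l l' <-. rewrite (functional_extensionality f g H). reflexivity. Qed.
#[global] Instance bex_pr : Proper (pointwise_relation nat eq ==> eq ==> eq) bex.
Proof. intros f g H l l' <-. rewrite (functional_extensionality f g H). reflexivity. Qed.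
#[global] Instance ball_pr : Proper (pointwise_relation nat eq ==> eq ==> eq) ball.
Proof. intros f g H l l' <-. rewrite (functional_extensionality f g H). reflexivity. Qed.
#[global] Instance cov_rec_pr : Proper (pointwise_relation nat (pointwise_relation nat eq) ==> eq ==> eq) cov_rec.
Proof.
  intros f g H l l' <-. assert (f = g).
  { apply functional_extensionality; intro; apply functional_extensionality; intro; apply H. }
  subst; reflexivity.
Qed.

Lemma den_liftS : forall k e x env, den (lift (S k) e) (scons x env) = den (lift k e) env.
Proof. intros. unfold lift. rewrite !den_ren. apply den_ext_all. reflexivity. Qed.
Lemma den_lift0 : forall e env, den (lift 0 e) env = den e env.
Proof. intros. unfold lift. rewrite den_ren. apply den_ext_all. reflexivity. Qed.
Lemma n2b_b2n : forall b, n2b (b2n b) = b.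
Proof. destruct b; reflexivity. Qed.
Lemma b2n_eq0 : forall b, (b2n b =? 0) = negb b.
Proof. destruct b; reflexivity. Qed.
Lemma den_EV0 : forall x env, den (EV 0) (scons x env) = x. Proof. reflexivity. Qed.
Lemma den_EVS : forall i x env, den (EV (S i)) (scons x env) = den (EV i) env. Proof. reflexivity. Qed.
Lemma den_ES : forall a env, den (ES a) env = S (den a env). Proof. reflexivity. Qed.
Lemma den_EZ : forall env, den EZ env = 0. Proof. reflexivity. Qed.

Global Opaque cov_rec.
Hint Rewrite den_liftS den_lift0 den_EV0 den_EVS den_ES den_EZ den_eadd den_esub den_emul
  den_eif den_eisz den_eeq den_ele den_eand den_eor den_enot den_elet den_eex den_eall
  den_ecpair den_eunpair1 den_eunpair2 den_ehd den_econs den_enth den_elen den_emem den_eexl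
  den_eallL den_emap den_efilter den_eapp den_eflat den_eseqr den_epow den_ediv den_emod
  den_ecov n2b_b2n b2n_eq0 dec_enc_nats : dendb.
Ltac simpl_den := repeat (rewrite_strat (topdown (hints dendb))).

(** * Decoders for encoded programs *)

Definition lookup (m tbl y : nat) : nat := nth (m - 1 - y) (dec_nats tbl) 0.
Definition elookup (m tbl y : pexp) : pexp := enth (esub (esub m (ES EZ)) y) tbl.
Lemma den_elookup : forall m tbl y env, den (elookup m tbl y) env = lookup (den m env) (den tbl env) (den y env).
Proof. intros. unfold elookup, lookup. simpl_den. reflexivity. Qed.
Global Opaque elookup.
Hint Rewrite den_elookup : dendb.

Definition occ_step (f n m tbl : nat) : nat :=
  if negb (unpair1 m =? 1) then 0 else
  b2n (((unpair1 (unpair2 m) =? f) && (length (dec_nats (unpair2 (unpair2 m))) =? n)) ||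
       existsb (fun y => n2b (lookup m tbl y)) (dec_nats (unpair2 (unpair2 m)))).
Definition occ_code (f n c : nat) : nat := cov_rec (occ_step f n) c.

Definition eocc_code (f n c : pexp) : pexp :=
  ecov (eif (eeq (eunpair1 (EV 0)) (ES EZ))
          (eor (eand (eeq (eunpair1 (eunpair2 (EV 0))) (lift 2 f)) (eeq (elen (eunpair2 (eunpair2 (EV 0)))) (lift 2 n)))
               (eexl (eunpair2 (eunpair2 (EV 0))) (elookup (EV 1) (EV 2) (EV 0))))
          EZ) c.
Lemma den_eocc_code : forall f n c env, den (eocc_code f n c) env = occ_code (den f env) (den n env) (den c env).
Proof. intros. unfold eocc_code, occ_code. simpl_den. reflexivity. Qed.
Hint Rewrite den_eocc_code : dendb.
Global Opaque eocc_code.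

Definition rule_atoms_code (r : nat) : list nat := dec_nats (unpair1 r) ++ map unpair2 (dec_nats (unpair2 r)).
Definition erule_atoms_code (r : pexp) : pexp := eapp (eunpair1 r) (emap (eunpair2 (EV 0)) (eunpair2 r)).
Lemma den_erule_atoms_code : forall r env, den (erule_atoms_code r) env = enc_nats (rule_atoms_code (den r env)).
Proof. intros. unfold erule_atoms_code, rule_atoms_code. simpl_den. reflexivity. Qed.
Global Opaque erule_atoms_code.
Hint Rewrite den_erule_atoms_code : dendb.

Definition sym_code (p f n : nat) : bool :=
  existsb (fun r => existsb (fun a => existsb (fun t => n2b (occ_code f n t)) (dec_nats (unpair2 a))) (rule_atoms_code r)) (dec_nats p).
Definition esym_code (p f n : pexp) : pexp :=
  eexl p (eexl (erule_atoms_code (EV 0)) (eexl (eunpair2 (EV 0)) (eocc_code (lift 3 f) (lift 3 n) (EV 0)))).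
Lemma den_esym_code : forall p f n env, den (esym_code p f n) env = b2n (sym_code (den p env) (den f env) (den n env)).
Proof. intros. unfold esym_code, sym_code. simpl_den. reflexivity. Qed.
Global Opaque esym_code.
Hint Rewrite den_esym_code : dendb.

Definition has_const_code (p : nat) : bool := bex (fun f => sym_code p f 0) (S p).
Definition ehas_const_code (p : pexp) : pexp := eex (ES p) (esym_code (lift 1 p) (EV 0) EZ).
Lemma den_ehas_const_code : forall p env, den (ehas_const_code p) env = b2n (has_const_code (den p env)).
Proof. intros. unfold ehas_const_code, has_const_code. simpl_den. reflexivity. Qed.
Global Opaque ehas_const_code.
Hint Rewrite den_ehas_const_code : dendb.

Definition hu_step (p m tbl : nat) : nat :=
  if negb (unpair1 m =? 1) then 0 else
  b2n ((sym_code p (unpair1 (unpair2 m)) (length (dec_nats (unpair2 (unpair2 m)))) &&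
        forallb (fun y => n2b (lookup m tbl y)) (dec_nats (unpair2 (unpair2 m))))
       || ((unpair2 m =? 0) && negb (has_const_code p))).
Definition hu_code (p c : nat) : nat := cov_rec (hu_step p) c.
Definition ehu_code (p c : pexp) : pexp :=
  ecov (eif (eeq (eunpair1 (EV 0)) (ES EZ))
          (eor (eand (esym_code (lift 2 p) (eunpair1 (eunpair2 (EV 0))) (elen (eunpair2 (eunpair2 (EV 0)))))
                     (eallL (eunpair2 (eunpair2 (EV 0))) (elookup (EV 1) (EV 2) (EV 0))))
               (eand (eeq (eunpair2 (EV 0)) EZ) (enot (ehas_const_code (lift 2 p)))))
          EZ) c.
Lemma den_ehu_code : forall p c env, den (ehu_code p c) env = hu_code (den p env) (den c env).
Proof. intros. unfold ehu_code, hu_code. simpl_den. reflexivity. Qed.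
Global Opaque ehu_code.
Hint Rewrite den_ehu_code : dendb.

(* [i] read in base [nT] selects, through its [x]-th digit, the term substituted for variable [x]
   among the [nT] codes listed in [T]. *)
Definition digit (i T nT x : nat) : nat := nth ((div_or_self i (nT ^ x)) mod nT) (dec_nats T) 0.
Definition subst_step (i T nT m tbl : nat) : nat :=
  if unpair1 m =? 0 then digit i T nT (unpair2 m)
  else cpair 1 (cpair (unpair1 (unpair2 m)) (enc_nats (map (fun y => lookup m tbl y) (dec_nats (unpair2 (unpair2 m)))))).
Definition subst_term_code (i T nT c : nat) : nat := cov_rec (subst_step i T nT) c.
Definition esubst_term_code (i T nT c : pexp) : pexp :=
  ecov (eif (eunpair1 (EV 0))
          (ecpair (ES EZ) (ecpair (eunpair1 (eunpair2 (EV 0))) (emap (elookup (EV 1) (EV 2) (EV 0)) (eunpair2 (eunpair2 (EV 0))))))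
          (enth (emod (ediv (lift 2 i) (epow (lift 2 nT) (eunpair2 (EV 0)))) (lift 2 nT)) (lift 2 T))) c.
Lemma den_esubst_term_code : forall i T nT c env, den (esubst_term_code i T nT c) env = subst_term_code (den i env) (den T env) (den nT env) (den c env).
Proof. intros. unfold esubst_term_code, subst_term_code. simpl_den. reflexivity. Qed.
Global Opaque esubst_term_code.
Hint Rewrite den_esubst_term_code : dendb.

Definition subst_atom_code (i T nT a : nat) : nat := cpair (unpair1 a) (enc_nats (map (subst_term_code i T nT) (dec_nats (unpair2 a)))).
Definition esubst_atom_code (i T nT a : pexp) : pexp :=
  ecpair (eunpair1 a) (emap (esubst_term_code (lift 1 i) (lift 1 T) (lift 1 nT) (EV 0)) (eunpair2 a)).
Lemma den_esubst_atom_code : forall i T nT a env, den (esubst_atom_code i T nT a) env = subst_atom_code (den i env) (den T env) (den nT env) (den a env).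
Proof. intros. unfold esubst_atom_code, subst_atom_code. simpl_den. reflexivity. Qed.
Global Opaque esubst_atom_code.
Hint Rewrite den_esubst_atom_code : dendb.

Definition subst_lit_code (i T nT l : nat) : nat := cpair (unpair1 l) (subst_atom_code i T nT (unpair2 l)).
Definition esubst_lit_code (i T nT l : pexp) : pexp := ecpair (eunpair1 l) (esubst_atom_code i T nT (eunpair2 l)).
Lemma den_esubst_lit_code : forall i T nT l env, den (esubst_lit_code i T nT l) env = subst_lit_code (den i env) (den T env) (den nT env) (den l env).
Proof. intros. unfold esubst_lit_code, subst_lit_code. simpl_den. reflexivity. Qed.
Global Opaque esubst_lit_code.
Hint Rewrite den_esubst_lit_code : dendb.

Definition subst_rule_code (i T nT r : nat) : nat :=
  cpair (enc_nats (map (subst_atom_code i T nT) (dec_nats (unpair1 r)))) (enc_nats (map (subst_lit_code i T nT) (dec_nats (unpair2 r)))).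
Definition esubst_rule_code (i T nT r : pexp) : pexp :=
  ecpair (emap (esubst_atom_code (lift 1 i) (lift 1 T) (lift 1 nT) (EV 0)) (eunpair1 r))
         (emap (esubst_lit_code (lift 1 i) (lift 1 T) (lift 1 nT) (EV 0)) (eunpair2 r)).
Lemma den_esubst_rule_code : forall i T nT r env, den (esubst_rule_code i T nT r) env = subst_rule_code (den i env) (den T env) (den nT env) (den r env).
Proof. intros. unfold esubst_rule_code, subst_rule_code. simpl_den. reflexivity. Qed.
Global Opaque esubst_rule_code.
Hint Rewrite den_esubst_rule_code : dendb.

Definition testbit (j idx : nat) : bool := (div_or_self j (2 ^ idx)) mod 2 =? 1.
Definition etestbit (j idx : pexp) : pexp := eeq (emod (ediv j (epow (ES (ES EZ)) idx)) (ES (ES EZ))) (ES EZ).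
Lemma den_etestbit : forall j idx env, den (etestbit j idx) env = b2n (testbit (den j env) (den idx env)).
Proof. intros. unfold etestbit, testbit. simpl_den. reflexivity. Qed.
Global Opaque etestbit.
Hint Rewrite den_etestbit : dendb.

(* A number [j] below [2 ^ length A] codes a subset of the list of atom codes [A] by its bits. *)
Definition bit_mem (A j a : nat) : bool :=
  bex (fun idx => (nth idx (dec_nats A) 0 =? a) && testbit j idx) (length (dec_nats A)).
Definition ebit_mem (A j a : pexp) : pexp :=
  eex (elen A) (eand (eeq (enth (EV 0) (lift 1 A)) (lift 1 a)) (etestbit (lift 1 j) (EV 0))).
Lemma den_ebit_mem : forall A j a env, den (ebit_mem A j a) env = b2n (bit_mem (den A env) (den j env) (den a env)).
Proof. intros. unfold ebit_mem, bit_mem. simpl_den. reflexivity. Qed.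
Global Opaque ebit_mem.
Hint Rewrite den_ebit_mem : dendb.

Definition neg_body_code (g : nat) : list nat := map unpair2 (filter (fun l => unpair1 l =? 1) (dec_nats (unpair2 g))).
Definition pos_body_code (g : nat) : list nat := map unpair2 (filter (fun l => unpair1 l =? 0) (dec_nats (unpair2 g))).
Definition eneg_body_code (g : pexp) : pexp := emap (eunpair2 (EV 0)) (efilter (eeq (eunpair1 (EV 0)) (ES EZ)) (eunpair2 g)).
Definition epos_body_code (g : pexp) : pexp := emap (eunpair2 (EV 0)) (efilter (eeq (eunpair1 (EV 0)) EZ) (eunpair2 g)).
Lemma den_eneg_body_code : forall g env, den (eneg_body_code g) env = enc_nats (neg_body_code (den g env)).
Proof. intros. unfold eneg_body_code, neg_body_code. simpl_den. reflexivity. Qed.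
Lemma den_epos_body_code : forall g env, den (epos_body_code g) env = enc_nats (pos_body_code (den g env)).
Proof. intros. unfold epos_body_code, pos_body_code. simpl_den. reflexivity. Qed.
Global Opaque eneg_body_code epos_body_code.
Hint Rewrite den_eneg_body_code den_epos_body_code : dendb.

Definition reduct_model_bits (G A j j' : nat) : bool :=
  forallb (fun g => negb (forallb (fun b => negb (bit_mem A j b)) (neg_body_code g)) ||
                    (negb (forallb (fun b => bit_mem A j' b) (pos_body_code g)) ||
                     existsb (fun a => bit_mem A j' a) (dec_nats (unpair1 g)))) (dec_nats G).
Definition ereduct_model_bits (G A j j' : pexp) : pexp :=
  eallL G (eor (enot (eallL (eneg_body_code (EV 0)) (enot (ebit_mem (lift 2 A) (lift 2 j) (EV 0)))))
               (eor (enot (eallL (epos_body_code (EV 0)) (ebit_mem (lift 2 A) (lift 2 j') (EV 0))))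
                    (eexl (eunpair1 (EV 0)) (ebit_mem (lift 2 A) (lift 2 j') (EV 0))))).
Lemma den_ereduct_model_bits : forall G A j j' env, den (ereduct_model_bits G A j j') env = b2n (reduct_model_bits (den G env) (den A env) (den j env) (den j' env)).
Proof. intros. unfold ereduct_model_bits, reduct_model_bits. simpl_den. reflexivity. Qed.
Global Opaque ereduct_model_bits.
Hint Rewrite den_ereduct_model_bits : dendb.

Definition subset_bits (A j' j : nat) : bool :=
  forallb (fun a => negb (bit_mem A j' a) || bit_mem A j a) (dec_nats A).
Definition esubset_bits (A j' j : pexp) : pexp :=
  eallL A (eor (enot (ebit_mem (lift 1 A) (lift 1 j') (EV 0))) (ebit_mem (lift 1 A) (lift 1 j) (EV 0))).
Lemma den_esubset_bits : forall A j' j env, den (esubset_bits A j' j) env = b2n (subset_bits (den A env) (den j' env) (den j env)).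
Proof. intros. unfold esubset_bits, subset_bits. simpl_den. reflexivity. Qed.
Global Opaque esubset_bits.
Hint Rewrite den_esubset_bits : dendb.

Definition stable_bits (G A j : nat) : bool :=
  reduct_model_bits G A j j && ball (fun j' => negb (subset_bits A j' j) || (negb (reduct_model_bits G A j j') || subset_bits A j j'))
                      (2 ^ length (dec_nats A)).
Definition estable_bits (G A j : pexp) : pexp :=
  eand (ereduct_model_bits G A j j)
       (eall (epow (ES (ES EZ)) (elen A))
          (eor (enot (esubset_bits (lift 1 A) (EV 0) (lift 1 j)))
               (eor (enot (ereduct_model_bits (lift 1 G) (lift 1 A) (lift 1 j) (EV 0))) (esubset_bits (lift 1 A) (lift 1 j) (EV 0))))).
Lemma den_estable_bits : forall G A j env, den (estable_bits G A j) env = b2n (stable_bits (den G env) (den A env) (den j env)).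
Proof. intros. unfold estable_bits, stable_bits. simpl_den. reflexivity. Qed.
Global Opaque estable_bits.
Hint Rewrite den_estable_bits : dendb.

(** * The witness check *)

Definition instances_ok (p G T nT B : nat) : bool :=
  forallb (fun g => existsb (fun r => bex (fun i => subst_rule_code i T nT r =? g) B) (dec_nats p)) (dec_nats G).
Definition einstances_ok (p G T nT B : pexp) : pexp :=
  eallL G (eexl (lift 1 p) (eex (lift 2 B) (eeq (esubst_rule_code (EV 0) (lift 3 T) (lift 3 nT) (EV 1)) (EV 2)))).
Lemma den_einstances_ok : forall p G T nT B env, den (einstances_ok p G T nT B) env =
  b2n (instances_ok (den p env) (den G env) (den T env) (den nT env) (den B env)).
Proof. intros. unfold einstances_ok, instances_ok. simpl_den. reflexivity. Qed.
Global Opaque einstances_ok.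
Hint Rewrite den_einstances_ok : dendb.

Definition heads_closed (p G T nT B A : nat) : bool :=
  forallb (fun r => ball (fun i =>
     negb (existsb (fun a => existsb (fun y => y =? a) (dec_nats A)) (dec_nats (unpair1 (subst_rule_code i T nT r))))
     || existsb (fun y => y =? subst_rule_code i T nT r) (dec_nats G)) B) (dec_nats p).
Definition eheads_closed (p G T nT B A : pexp) : pexp :=
  eallL p (eall (lift 1 B) (eor (enot (eexl (eunpair1 (esubst_rule_code (EV 0) (lift 2 T) (lift 2 nT) (EV 1))) (emem (EV 0) (lift 3 A))))
                                (emem (esubst_rule_code (EV 0) (lift 2 T) (lift 2 nT) (EV 1)) (lift 2 G)))).
Lemma den_eheads_closed : forall p G T nT B A env, den (eheads_closed p G T nT B A) env =
  b2n (heads_closed (den p env) (den G env) (den T env) (den nT env) (den B env) (den A env)).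
Proof. intros. unfold eheads_closed, heads_closed. simpl_den. reflexivity. Qed.
Global Opaque eheads_closed.
Hint Rewrite den_eheads_closed : dendb.

Definition terms_bounded (k A : nat) : bool := forallb (fun a => forallb (fun t => t <=? k) (dec_nats (unpair2 a))) (dec_nats A).
Definition eterms_bounded (k A : pexp) : pexp := eallL A (eallL (eunpair2 (EV 0)) (ele (EV 0) (lift 2 k))).
Lemma den_eterms_bounded : forall k A env, den (eterms_bounded k A) env = b2n (terms_bounded (den k env) (den A env)).
Proof. intros. unfold eterms_bounded, terms_bounded. simpl_den. reflexivity. Qed.
Global Opaque eterms_bounded.
Hint Rewrite den_eterms_bounded : dendb.

Definition no_stable_bits (G A : nat) : bool := ball (fun j => negb (stable_bits G A j)) (2 ^ length (dec_nats A)).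
Definition eno_stable_bits (G A : pexp) : pexp := eall (epow (ES (ES EZ)) (elen A)) (enot (estable_bits (lift 1 G) (lift 1 A) (EV 0))).
Lemma den_eno_stable_bits : forall G A env, den (eno_stable_bits G A) env = b2n (no_stable_bits (den G env) (den A env)).
Proof. intros. unfold eno_stable_bits, no_stable_bits. simpl_den. reflexivity. Qed.
Global Opaque eno_stable_bits.
Hint Rewrite den_eno_stable_bits : dendb.

Definition hu_codes (p k : nat) : list nat := filter (fun c => n2b (hu_code p c)) (rev (seq 0 (S k))).

(* A witness [w = cpair k G] lists in [G] the codes of ground rules.  Instances of the rules
   of the program coded by [p] are searched through the substitutions of Herbrand terms of code
   at most [k] for the variables [0 .. p]; [p] bounds the variables occurring in the program. *)
Definition accepts (p w : nat) : bool :=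
  let k := unpair1 w in let G := unpair2 w in
  let L := hu_codes p k in let B := length L ^ S p in
  let A := enc_nats (concat (map rule_atoms_code (dec_nats G))) in
  instances_ok p G (enc_nats L) (length L) B && (heads_closed p G (enc_nats L) (length L) B A &&
  (terms_bounded k A && ((p <=? k) && no_stable_bits G A))).

(* De Bruijn layout of the environment in the body: A, B, length L, enc_nats L, G, k, w, p. *)
Definition eaccepts : pexp :=
  elet (eunpair1 (EV 0))
  (elet (eunpair2 (EV 1))
  (elet (efilter (ehu_code (EV 4) (EV 0)) (eseqr (ES (EV 1))))
  (elet (elen (EV 0))
  (elet (epow (EV 0) (ES (EV 5)))
  (elet (eflat (emap (erule_atoms_code (EV 0)) (EV 3)))
   (eand (einstances_ok (EV 7) (EV 4) (EV 3) (EV 2) (EV 1))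
   (eand (eheads_closed (EV 7) (EV 4) (EV 3) (EV 2) (EV 1) (EV 0))
   (eand (eterms_bounded (EV 5) (EV 0))
   (eand (ele (EV 7) (EV 5)) (eno_stable_bits (EV 4) (EV 0))))))))))).

Lemma map_dec_enc_nats : forall (f : nat -> list nat) l, map dec_nats (map (fun y => enc_nats (f y)) l) = map f l.
Proof. intros. rewrite map_map. apply map_ext. intros. apply dec_enc_nats. Qed.

Lemma den_eaccepts : forall w p env, den eaccepts (scons w (scons p env)) = b2n (accepts p w).
Proof. intros. unfold eaccepts, accepts, hu_codes. simpl_den. rewrite map_dec_enc_nats. reflexivity. Qed.

(* [MMin] searches for a zero of [check], i.e. for an accepted witness. *)
Definition check : pexp := eif eaccepts EZ (ES EZ).
Definition semidecider : mu := MMin (compile check).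

Inductive mu_free : mu -> Prop :=
| mu_free_zero : mu_free MZero | mu_free_succ : mu_free MSucc | mu_free_proj i : mu_free (MProj i)
| mu_free_comp f gs : mu_free f -> Forall mu_free gs -> mu_free (MComp f gs)
| mu_free_rec g h : mu_free g -> mu_free h -> mu_free (MRec g h).

Scheme eval_mind := Induction for eval Sort Prop
  with evalL_mind := Induction for evalL Sort Prop.

Lemma eval_deterministic : forall e xs y, eval e xs y -> mu_free e -> forall y', eval e xs y' -> y = y'.
Proof.
  apply (eval_mind (fun e xs y _ => mu_free e -> forall y', eval e xs y' -> y = y')
                   (fun es xs ys _ => Forall mu_free es -> forall ys', evalL es xs ys' -> ys = ys')).
  - intros xs _ y' H. inversion H; auto.
  - intros xs _ y' H. inversion H; auto.
  - intros i xs _ y' H. inversion H; auto.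
  - intros f gs xs ys y HL IHL Hf IHf Hnm y' H. inversion Hnm; subst. inversion H; subst.
    assert (ys = ys0) by (apply IHL; auto). subst. apply IHf; auto.
  - intros g h xs y Hg IHg Hnm y' H. inversion Hnm; subst. inversion H; subst. apply IHg; auto.
  - intros g h n xs z y H1 IH1 H2 IH2 Hnm y' H. inversion Hnm; subst. inversion H; subst.
    assert (z = z0) by (apply IH1; auto). subst. apply IH2; auto.
  - intros f xs n _ _ _ Hnm. inversion Hnm.
  - intros xs _ ys' H. inversion H; auto.
  - intros g gs xs y ys Hg IHg HL IHL Hnm ys' H. inversion Hnm; subst. inversion H; subst.
    f_equal; [apply IHg|apply IHL]; auto.
Qed.

Lemma mu_free_compile : forall e, mu_free (compile e).
Proof.
  assert (HP : forall l, Forall mu_free (map MProj l)) by (induction l; simpl; repeat constructor; auto).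
  induction e; simpl; repeat constructor; auto.
Qed.

Lemma den_check : forall w p, den check (fun i => nth i [w; p] 0) = if accepts p w then 0 else 1.
Proof.
  intros. unfold check. rewrite den_eif.
  rewrite (den_ext_all eaccepts _ (scons w (scons p (fun _ => 0)))) by (intros [|[|[|i]]]; reflexivity).
  rewrite den_eaccepts. destruct (accepts p w); reflexivity.
Qed.

Lemma halts_semidecider : forall p, halts semidecider p <-> exists w, accepts p w = true.
Proof.
  intros p. unfold halts, semidecider. split.
  - intros [y Hy]. inversion Hy as [| | | | | |f xs n H3 H4]; subst.
    pose proof (eval_compile check (y :: [p])) as H.
    exists y. rewrite den_check in H.
    pose proof (eval_deterministic _ _ _ H3 (mu_free_compile check) _ H).
    destruct (accepts p y); auto. discriminate.
  - intros Hex.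
    assert (Hmin : exists w, accepts p w = true /\ forall m, m < w -> accepts p m = false).
    { destruct Hex as [w Hw]. induction w using (well_founded_induction lt_wf).
      destruct (bex (fun m => accepts p m) w) eqn:E.
      - apply bex_spec in E. destruct E as [m [Hm Hm']]. apply (H m Hm Hm').
      - exists w. split; auto. intros m Hm. destruct (accepts p m) eqn:E2; auto.
        assert (bex (fun m => accepts p m) w = true) by (apply bex_spec; eauto). congruence. }
    destruct Hmin as [w [Hw Hm]]. exists w. constructor.
    + pose proof (eval_compile check (w :: [p])). rewrite den_check, Hw in H. exact H.
    + intros m Hlt. pose proof (eval_compile check (m :: [p])). rewrite den_check, Hm in H by auto.
      eauto.
Qed.

Transparent cov_rec.

(** * Properties of the encoding *)

Lemma term_nested_ind (Pt : term -> Prop) :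
  (forall n, Pt (Var n)) -> (forall f ts, Forall Pt ts -> Pt (Fn f ts)) -> forall t, Pt t.
Proof.
  intros HV HF. fix IH 1. intros t. destruct t as [n|f ts].
  - apply HV.
  - apply HF. induction ts as [|u ts IHts]; constructor. apply IH. apply IHts.
Qed.

Lemma enc_list_nats : forall (X : Type) (e : X -> nat) l, enc_list e l = enc_nats (map e l).
Proof. intros; induction l; simpl; auto; rewrite IHl; reflexivity. Qed.

Lemma enc_term_Fn : forall f ts, enc_term (Fn f ts) = cpair 1 (cpair f (enc_nats (map enc_term ts))).
Proof.
  intros. simpl. do 2 f_equal. induction ts; simpl; auto; rewrite IHts; reflexivity.
Qed.
Lemma enc_term_Var : forall n, enc_term (Var n) = cpair 0 n.
Proof. reflexivity. Qed.
Global Opaque enc_term.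

Lemma sym_in_term_Fn : forall f n g ts,
  sym_in_term f n (Fn g ts) <-> (g = f /\ length ts = n) \/ exists u, In u ts /\ sym_in_term f n u.
Proof.
  intros. simpl. apply or_iff_compat_l. induction ts; simpl. split; [tauto|]. intros [u [[] _]].
  rewrite IHts. split.
  - intros [H|[u [Hu H]]]; eauto.
  - intros [u [[->|Hu] H]]; eauto.
Qed.
Lemma sym_in_term_Var : forall f n x, ~ sym_in_term f n (Var x).
Proof. simpl; tauto. Qed.
Global Opaque sym_in_term.

Lemma enc_term_inj : forall t t', enc_term t = enc_term t' -> t = t'.
Proof.
  induction t using term_nested_ind; intros [m|g ts'] H';
  rewrite ?enc_term_Var, ?enc_term_Fn in H'; apply cpair_inj in H'; destruct H' as [H1 H2]; try discriminate.
  - congruence.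
  - apply cpair_inj in H2. destruct H2 as [-> H2]. apply enc_nats_inj in H2. f_equal.
    revert ts' H2. induction H; intros [|u ts'] H2; simpl in H2; try discriminate; auto.
    injection H2; intros. f_equal; auto.
Qed.

Lemma map_inj : forall (X Y : Type) (f : X -> Y), (forall x y, f x = f y -> x = y) ->
  forall l l', map f l = map f l' -> l = l'.
Proof. induction l; intros [|b l'] H'; simpl in *; try discriminate; auto.
  injection H'; intros. f_equal; auto. Qed.

Lemma enc_atom_inj : forall a a', enc_atom a = enc_atom a' -> a = a'.
Proof.
  intros [p ts] [p' ts'] H. unfold enc_atom in H. simpl in H. apply cpair_inj in H.
  destruct H as [-> H]. rewrite !enc_list_nats in H. apply enc_nats_inj in H.
  apply map_inj in H; [subst; auto| apply enc_term_inj].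
Qed.
Lemma enc_literal_inj : forall l l', enc_literal l = enc_literal l' -> l = l'.
Proof.
  intros [a|a] [b|b] H; simpl in H; apply cpair_inj in H; destruct H as [H1 H2]; try discriminate;
  apply enc_atom_inj in H2; subst; auto.
Qed.
Lemma enc_rule_inj : forall r r', enc_rule r = enc_rule r' -> r = r'.
Proof.
  intros [h b] [h' b'] H. unfold enc_rule in H. simpl in H. apply cpair_inj in H.
  destruct H as [H1 H2]. rewrite !enc_list_nats in H1, H2. apply enc_nats_inj in H1, H2.
  apply map_inj in H1; [|apply enc_atom_inj]. apply map_inj in H2; [|apply enc_literal_inj]. subst; auto.
Qed.

Lemma enc_atom_eq : forall a, enc_atom a = cpair (pred a) (enc_nats (map enc_term (args a))).
Proof. intros. unfold enc_atom. rewrite enc_list_nats. reflexivity. Qed.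
Lemma enc_rule_eq : forall r, enc_rule r = cpair (enc_nats (map enc_atom (head r))) (enc_nats (map enc_literal (body r))).
Proof. intros. unfold enc_rule. rewrite !enc_list_nats. reflexivity. Qed.
Lemma enc_program_eq : forall P, enc_program P = enc_nats (map enc_rule P).
Proof. intros. unfold enc_program. rewrite enc_list_nats. reflexivity. Qed.
Lemma unp2_enc_literal : forall l, unpair2 (enc_literal l) = enc_atom (lit_atom l).
Proof. intros [a|a]; simpl; apply unpair2_cpair. Qed.
Lemma rule_atoms_code_enc : forall r, rule_atoms_code (enc_rule r) = map enc_atom (rule_atoms r).
Proof.
  intros. unfold rule_atoms_code, rule_atoms. rewrite enc_rule_eq, unpair1_cpair, unpair2_cpair, !dec_enc_nats.
  rewrite map_app, map_map, map_map. f_equal. apply map_ext. apply unp2_enc_literal.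
Qed.

Lemma in_map_lt : forall (X : Type) (e : X -> nat) l x, In x l -> e x < enc_nats (map e l).
Proof. intros. apply in_lt_enc_nats. apply in_map; auto. Qed.

Lemma sym_in_term_le : forall f n t, sym_in_term f n t -> f <= enc_term t /\ n <= enc_term t.
Proof.
  induction t using term_nested_ind; intros Hs. apply sym_in_term_Var in Hs; tauto.
  rewrite enc_term_Fn. apply sym_in_term_Fn in Hs.
  pose proof (cpair_ge1 f0 (enc_nats (map enc_term ts))). pose proof (cpair_ge2 f0 (enc_nats (map enc_term ts))).
  pose proof (cpair_ge2 1 (cpair f0 (enc_nats (map enc_term ts)))).
  destruct Hs as [[-> <-]|[u [Hu Hs]]].
  - pose proof (length_le_enc_nats (map enc_term ts)). rewrite length_map in H3. lia.
  - rewrite Forall_forall in H. destruct (H u Hu Hs). pose proof (in_map_lt _ enc_term ts u Hu). lia.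
Qed.

Lemma enc_atom_lt_rule : forall r a, In a (rule_atoms r) -> enc_atom a < S (enc_rule r).
Proof.
  intros r a H. rewrite enc_rule_eq. unfold rule_atoms in H. apply in_app_or in H. destruct H.
  - pose proof (in_map_lt _ enc_atom _ _ H). pose proof (cpair_ge1 (enc_nats (map enc_atom (head r))) (enc_nats (map enc_literal (body r)))). lia.
  - apply in_map_iff in H. destruct H as [l [<- Hl]].
    pose proof (in_map_lt _ enc_literal _ _ Hl).
    pose proof (cpair_ge2 (enc_nats (map enc_atom (head r))) (enc_nats (map enc_literal (body r)))).
    rewrite <- unp2_enc_literal. pose proof (unpair2_le (enc_literal l)). lia.
Qed.

Lemma enc_term_lt_atom : forall a t, In t (args a) -> enc_term t < enc_atom a.
Proof.
  intros. rewrite enc_atom_eq. pose proof (in_map_lt _ enc_term _ _ H).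
  pose proof (cpair_ge2 (pred a) (enc_nats (map enc_term (args a)))). lia.
Qed.

Lemma sym_in_program_le : forall P f n, sym_in_program P f n -> f <= enc_program P /\ n <= enc_program P.
Proof.
  intros P f n [r [a [Hr [Ha [t [Ht Hs]]]]]]. apply sym_in_term_le in Hs.
  pose proof (enc_term_lt_atom a t Ht). pose proof (enc_atom_lt_rule r a Ha).
  pose proof (in_map_lt _ enc_rule P r Hr) as H3. rewrite <- enc_program_eq in H3. lia.
Qed.

(** * Correctness of the decoders *)

Lemma unpair_enc_Fn : forall g ts,
  unpair1 (enc_term (Fn g ts)) = 1 /\ unpair1 (unpair2 (enc_term (Fn g ts))) = g /\
  unpair2 (unpair2 (enc_term (Fn g ts))) = enc_nats (map enc_term ts).
Proof. intros. rewrite enc_term_Fn, !unpair1_cpair, !unpair2_cpair, unpair1_cpair. auto. Qed.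
Lemma unpair_enc_Var : forall x, unpair1 (enc_term (Var x)) = 0 /\ unpair2 (enc_term (Var x)) = x.
Proof. intros. rewrite enc_term_Var, unpair1_cpair, unpair2_cpair. auto. Qed.

Lemma enc_arg_lt : forall g ts y, In y (map enc_term ts) -> y < enc_term (Fn g ts).
Proof.
  intros. rewrite enc_term_Fn. apply in_lt_enc_nats in H.
  pose proof (cpair_ge2 g (enc_nats (map enc_term ts))). pose proof (cpair_ge2 1 (cpair g (enc_nats (map enc_term ts)))). lia.
Qed.

Lemma lookup_cov_table : forall st c y, y < c -> lookup c (cov_table st c) y = cov_rec st y.
Proof. intros. unfold lookup. apply nth_cov_table. auto. Qed.

Lemma occ_code_spec : forall f n t, n2b (occ_code f n (enc_term t)) = true <-> sym_in_term f n t.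
Proof.
  intros f n. induction t using term_nested_ind.
  - destruct (unpair_enc_Var n0) as [H1 H2]. unfold occ_code, cov_rec, occ_step. rewrite H1. simpl.
    split; [discriminate|]. intro H. apply sym_in_term_Var in H. tauto.
  - destruct (unpair_enc_Fn f0 ts) as [H1 [H2 H3]]. unfold occ_code at 1. unfold cov_rec at 1. unfold occ_step at 1.
    rewrite H1, H2, H3, dec_enc_nats. simpl negb. cbv iota. rewrite n2b_b2n, sym_in_term_Fn, orb_true_iff, andb_true_iff.
    rewrite !Nat.eqb_eq, length_map, existsb_exists. apply or_iff_compat_l. split.
    + intros [y [Hy Hl]]. pose proof (enc_arg_lt f0 ts y Hy). apply in_map_iff in Hy. destruct Hy as [u [<- Hu]].
      exists u. split; auto. rewrite Forall_forall in H. apply H; auto.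
      rewrite lookup_cov_table in Hl by auto. exact Hl.
    + intros [u [Hu Hs]]. exists (enc_term u). split. apply in_map; auto.
      rewrite lookup_cov_table by (apply enc_arg_lt, in_map; auto). rewrite Forall_forall in H. apply H; auto.
Qed.

Lemma sym_code_spec : forall P f n, sym_code (enc_program P) f n = true <-> sym_in_program P f n.
Proof.
  intros. unfold sym_code, sym_in_program. rewrite enc_program_eq, dec_enc_nats, existsb_exists. split.
  - intros [rc [Hrc H]]. apply in_map_iff in Hrc. destruct Hrc as [r [<- Hr]].
    rewrite rule_atoms_code_enc, existsb_exists in H. destruct H as [ac [Hac H]].
    apply in_map_iff in Hac. destruct Hac as [a [<- Ha]].
    rewrite enc_atom_eq, unpair2_cpair, dec_enc_nats, existsb_exists in H. destruct H as [tc [Htc H]].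
    apply in_map_iff in Htc. destruct Htc as [t [<- Ht]].
    exists r, a. repeat split; auto. exists t. split; auto. apply occ_code_spec; auto.
  - intros [r [a [Hr [Ha [t [Ht Hs]]]]]]. exists (enc_rule r). split. apply in_map; auto.
    rewrite rule_atoms_code_enc, existsb_exists. exists (enc_atom a). split. apply in_map; auto.
    rewrite enc_atom_eq, unpair2_cpair, dec_enc_nats, existsb_exists. exists (enc_term t).
    split. apply in_map; auto. apply occ_code_spec; auto.
Qed.

Lemma has_const_code_spec : forall P, has_const_code (enc_program P) = true <-> exists f, sym_in_program P f 0.
Proof.
  intros. unfold has_const_code. rewrite bex_spec. split.
  - intros [f [_ H]]. exists f. apply sym_code_spec; auto.
  - intros [f H]. exists f. split. pose proof (sym_in_program_le _ _ _ H). lia. apply sym_code_spec; auto.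
Qed.

Lemma cpair00 : cpair 0 0 = 0. Proof. reflexivity. Qed.

Lemma hu_code_complete : forall P t, in_HU P t -> n2b (hu_code (enc_program P) (enc_term t)) = true.
Proof.
  intros P. induction t using term_nested_ind; intros Hhu; inversion Hhu as [f' ts' Hsym Hall| Hnc]; subst.
  - destruct (unpair_enc_Fn f ts) as [E1 [E2 E3]]. unfold hu_code at 1, cov_rec at 1, hu_step at 1.
    rewrite E1, E2, E3, dec_enc_nats. simpl negb. cbv iota. rewrite n2b_b2n, orb_true_iff. left.
    rewrite andb_true_iff, length_map, forallb_forall. split. apply sym_code_spec; auto.
    intros y Hy. rewrite lookup_cov_table by (apply enc_arg_lt; auto).
    apply in_map_iff in Hy. destruct Hy as [u [<- Hu]]. rewrite Forall_forall in H, Hall.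
    apply H; auto.
  - unfold hu_code at 1, cov_rec at 1, hu_step at 1. rewrite enc_term_Fn. simpl map. simpl enc_nats.
    rewrite cpair00, unpair1_cpair, unpair2_cpair. simpl negb. cbv iota. rewrite n2b_b2n, orb_true_iff. right.
    rewrite andb_true_iff. split; auto. apply negb_true_iff.
    destruct (has_const_code (enc_program P)) eqn:E; auto. apply has_const_code_spec in E.
    destruct E as [f Hf]. exfalso. eapply Hnc; eauto.
Qed.

Lemma list_choice : forall (X Y : Type) (Q : Y -> X -> Prop) (L : list Y),
  (forall y, In y L -> exists x, Q y x) -> exists xs, Forall2 (fun x y => Q y x) xs L.
Proof.
  induction L; intros H. exists []. constructor.
  destruct (H a (or_introl eq_refl)) as [t Ht]. destruct IHL as [ts Hts]. intros; apply H; right; auto.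
  exists (t :: ts). constructor; auto.
Qed.

Lemma hu_code_sound : forall P c, n2b (hu_code (enc_program P) c) = true ->
  exists t, enc_term t = c /\ in_HU P t.
Proof.
  intros P c. induction c as [c IH] using (well_founded_induction lt_wf). intros Hc.
  unfold hu_code at 1, cov_rec at 1, hu_step at 1 in Hc.
  destruct (Nat.eqb_spec (unpair1 c) 1) as [E1|E1]; [|simpl in Hc; discriminate].
  simpl negb in Hc. cbv iota in Hc. rewrite n2b_b2n, orb_true_iff, !andb_true_iff in Hc.
  destruct Hc as [[Hocc Hall]|[Hz Hnc]].
  - set (L := dec_nats (unpair2 (unpair2 c))) in *.
    assert (Hlt : forall y, In y L -> y < c).
    { intros y Hy. apply in_dec_nats_lt in Hy. pose proof (unpair2_le c). pose proof (unpair2_le (unpair2 c)). lia. }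
    destruct (list_choice _ _ (fun y t => enc_term t = y /\ in_HU P t) L) as [ts Hts].
    { intros y Hy. apply IH; auto. rewrite forallb_forall in Hall. specialize (Hall y Hy).
      rewrite lookup_cov_table in Hall by auto. exact Hall. }
    assert (Hmap : map enc_term ts = L).
    { clear -Hts. induction Hts; simpl; auto. destruct H; subst; f_equal; auto. }
    exists (Fn (unpair1 (unpair2 c)) ts). split.
    + rewrite enc_term_Fn, Hmap. unfold L. rewrite enc_dec_nats, cpair_unpair, <- E1, cpair_unpair. reflexivity.
    + constructor.
      * apply sym_code_spec. replace (length ts) with (length L); auto. rewrite <- Hmap, length_map; auto.
      * clear -Hts. induction Hts; constructor; auto. apply H.
  - apply Nat.eqb_eq in Hz. apply negb_true_iff in Hnc. exists (Fn 0 []). split.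
    + rewrite enc_term_Fn. rewrite <- (cpair_unpair c), E1, Hz. reflexivity.
    + apply hu_default. intros f Hf. assert (has_const_code (enc_program P) = true) by (apply has_const_code_spec; eauto).
      congruence.
Qed.

Lemma subst_term_code_spec : forall i T nT (s : nat -> term),
  (forall x, enc_term (s x) = digit i T nT x) ->
  forall t, subst_term_code i T nT (enc_term t) = enc_term (subst_term s t).
Proof.
  intros i T nT s Hs. induction t using term_nested_ind.
  - destruct (unpair_enc_Var n) as [H1 H2]. unfold subst_term_code, cov_rec, subst_step. rewrite H1, H2. simpl. auto.
  - destruct (unpair_enc_Fn f ts) as [H1 [H2 H3]]. unfold subst_term_code at 1, cov_rec at 1, subst_step at 1.
    set (c := enc_term (Fn f ts)) in *.
    rewrite H1, H2, H3, dec_enc_nats. simpl subst_term. cbv iota. simpl Nat.eqb. cbv iota.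
    rewrite (enc_term_Fn f (map (subst_term s) ts)). f_equal. f_equal. f_equal. rewrite !map_map. apply map_ext_in. intros u Hu.
    unfold c. rewrite lookup_cov_table by (apply enc_arg_lt, in_map; auto). rewrite Forall_forall in H. apply H; auto.
Qed.

Lemma subst_rule_code_spec : forall i T nT (s : nat -> term),
  (forall x, enc_term (s x) = digit i T nT x) ->
  forall r, subst_rule_code i T nT (enc_rule r) = enc_rule (subst_rule s r).
Proof.
  intros. assert (HA : forall a, subst_atom_code i T nT (enc_atom a) = enc_atom (subst_atom s a)).
  { intros. unfold subst_atom_code. rewrite !enc_atom_eq, unpair1_cpair, unpair2_cpair, dec_enc_nats. simpl.
    f_equal. f_equal. rewrite !map_map. apply map_ext. apply subst_term_code_spec; auto. }
  unfold subst_rule_code. rewrite !enc_rule_eq, unpair1_cpair, unpair2_cpair, !dec_enc_nats. simpl.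
  f_equal; f_equal; rewrite !map_map; apply map_ext; auto.
  intros [a|a]; unfold subst_lit_code; simpl; rewrite unpair1_cpair, unpair2_cpair, HA; reflexivity.
Qed.

(** * Digit expansions *)

Lemma digits_surj : forall b n (d : nat -> nat), 0 < b -> (forall x, x < n -> d x < b) ->
  exists j, j < b ^ n /\ forall x, x < n -> (j / b ^ x) mod b = d x.
Proof.
  intros b n d Hb. induction n; intros Hd.
  - exists 0. split. simpl; lia. intros; lia.
  - destruct IHn as [j [Hj Hdig]]. intros; apply Hd; lia.
    assert (Hdn : d n < b) by (apply Hd; lia).
    exists (j + d n * b ^ n). split.
    + rewrite Nat.pow_succ_r'. nia.
    + intros x Hx. assert (Hbx : b ^ x <> 0) by (apply Nat.pow_nonzero; lia).
      destruct (Nat.eq_dec x n).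
      * subst. rewrite Nat.div_add by auto. rewrite Nat.div_small by auto. simpl.
        apply Nat.mod_small; auto.
      * assert (Hx' : x < n) by lia.
        replace (d n * b ^ n) with ((d n * b ^ (n - S x)) * b * b ^ x).
        2:{ assert (E : b ^ n = b ^ (S (n - S x) + x)) by (f_equal; lia).
            rewrite E, Nat.pow_add_r, Nat.pow_succ_r'. lia. }
        rewrite Nat.div_add by auto. rewrite Nat.Div0.mod_add. apply Hdig; auto.
Qed.

Lemma div_or_self_pos : forall a d, 0 < d -> div_or_self a d = a / d.
Proof. intros. unfold div_or_self. destruct (Nat.eqb_spec d 0); auto; lia. Qed.

Lemma digit_in : forall i T nT x, nT = length (dec_nats T) -> 0 < nT -> In (digit i T nT x) (dec_nats T).
Proof.
  intros. unfold digit. apply nth_In. rewrite <- H. apply Nat.mod_upper_bound. lia.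
Qed.

Lemma digit_surj : forall T nT p (v : nat -> nat), nT = length (dec_nats T) -> 0 < nT ->
  (forall x, x <= p -> In (v x) (dec_nats T)) ->
  exists i, i < nT ^ S p /\ forall x, x <= p -> digit i T nT x = v x.
Proof.
  intros T nT p v HnT Hpos Hv.
  assert (Hidx : forall x, exists k, x <= p -> k < nT /\ nth k (dec_nats T) 0 = v x).
  { intros x. destruct (le_lt_dec x p).
    - destruct (In_nth _ _ 0 (Hv x l)) as [k [Hk Hn]]. exists k. intros; subst; auto.
    - exists 0. intros; lia. }
  destruct (choice _ Hidx) as [d Hd].
  destruct (digits_surj nT (S p) d Hpos) as [i [Hi Hdig]].
  { intros x Hx. apply Hd; lia. }
  exists i. split; auto. intros x Hx. unfold digit. rewrite div_or_self_pos by (apply Nat.neq_0_lt_0, Nat.pow_nonzero; lia).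
  rewrite Hdig by lia. apply Hd; auto.
Qed.

Lemma bits_surj : forall (Al : list nat) (Q : nat -> Prop),
  exists j, j < 2 ^ length Al /\ forall a, bit_mem (enc_nats Al) j a = true <-> In a Al /\ Q a.
Proof.
  intros Al Q.
  set (d := fun idx => if excluded_middle_informative (Q (nth idx Al 0)) then 1 else 0).
  destruct (digits_surj 2 (length Al) d) as [j [Hj Hdig]]. lia.
  { intros x _. unfold d. destruct (excluded_middle_informative _); lia. }
  exists j. split; auto. intros a. unfold bit_mem. rewrite dec_enc_nats, bex_spec. split.
  - intros [idx [Hidx H]]. apply andb_true_iff in H. destruct H as [H1 H2]. apply Nat.eqb_eq in H1.
    unfold testbit in H2. rewrite div_or_self_pos in H2 by (apply Nat.neq_0_lt_0, Nat.pow_nonzero; lia).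
    rewrite Hdig in H2 by auto. unfold d in H2. destruct (excluded_middle_informative _); [|discriminate].
    subst. split; auto. apply nth_In; auto.
  - intros [Ha HQ]. destruct (In_nth _ _ 0 Ha) as [idx [Hidx Hn]]. exists idx. split; auto.
    apply andb_true_iff. split. apply Nat.eqb_eq; auto.
    unfold testbit. rewrite div_or_self_pos by (apply Nat.neq_0_lt_0, Nat.pow_nonzero; lia).
    rewrite Hdig by auto. unfold d. destruct (excluded_middle_informative _); auto. subst; contradiction.
Qed.

Lemma bit_mem_in : forall A j a, bit_mem A j a = true -> In a (dec_nats A).
Proof.
  intros. unfold bit_mem in H. apply bex_spec in H. destruct H as [idx [Hidx H]].
  apply andb_true_iff in H. destruct H as [H _]. apply Nat.eqb_eq in H. subst. apply nth_In; auto.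
Qed.

(** * Stable models relative to a set of ground rules *)

Definition model_for (R : rule -> Prop) (M N : atom -> Prop) : Prop :=
  forall g, R g -> (forall B, In B (neg_body g) -> ~ M B) -> (forall B, In B (pos_body g) -> N B) ->
    exists A, In A (head g) /\ N A.
Definition stable_for (R : rule -> Prop) (D M : atom -> Prop) : Prop :=
  (forall a, M a -> D a) /\ model_for R M M /\
  (forall N, (forall a, N a -> M a) -> model_for R M N -> forall a, M a -> N a).

Lemma pos_body_map_Pos : forall l, pos_body (Rule [] (map Pos l)) = l.
Proof. induction l; simpl; auto. unfold pos_body in *. simpl in *. f_equal; auto. Qed.

Lemma model_of_reduct_iff : forall P M N, model_of_reduct P M N <-> model_for (ground_rule P) M N.
Proof.
  intros. unfold model_of_reduct, model_for. split.
  - intros H g Hg Hneg Hpos. apply (H (Rule (head g) (map Pos (pos_body g)))).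
    + exists g. repeat split; auto.
    + intros B HB. apply Hpos. rewrite <- (pos_body_map_Pos (pos_body g)).
      unfold pos_body in HB |- *. simpl in *. exact HB.
  - intros H g [g0 [Hg0 [Hneg ->]]] Hpos. apply (H g0); auto. intros B HB. apply Hpos.
    rewrite <- (pos_body_map_Pos (pos_body g0)) in HB. unfold pos_body in HB |- *. simpl in *. exact HB.
Qed.

Lemma stable_model_iff : forall P M, stable_model P M <-> stable_for (ground_rule P) (ground_atom P) M.
Proof.
  intros. unfold stable_model, stable_for, herbrand_interp. rewrite model_of_reduct_iff. split.
  - intros [H1 [H2 H3]]. repeat split; auto. intros N HN HmN. apply H3.
    + intros a Na. apply H1, HN; auto.
    + auto.
    + apply model_of_reduct_iff; auto.
  - intros [H1 [H2 H3]]. repeat split; auto. intros N _ HN HmN. apply H3; auto.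
    apply model_of_reduct_iff; auto.
Qed.

Lemma in_head_atoms : forall g a, In a (head g) -> In a (rule_atoms g).
Proof. intros. unfold rule_atoms. apply in_or_app; auto. Qed.
Lemma in_pos_atoms : forall g a, In a (pos_body g) -> In a (rule_atoms g).
Proof.
  intros g a H. unfold rule_atoms. apply in_or_app; right. unfold pos_body in H.
  apply in_flat_map in H. destruct H as [[b|b] [Hl Hb]]; simpl in Hb; [|tauto].
  destruct Hb as [->|[]]. apply in_map_iff. exists (Pos a); auto.
Qed.
Lemma in_neg_atoms : forall g a, In a (neg_body g) -> In a (rule_atoms g).
Proof.
  intros g a H. unfold rule_atoms. apply in_or_app; right. unfold neg_body in H.
  apply in_flat_map in H. destruct H as [[b|b] [Hl Hb]]; simpl in Hb; [tauto|].
  destruct Hb as [->|[]]. apply in_map_iff. exists (Neg a); auto.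
Qed.

Definition touching (R : rule -> Prop) (U : atom -> Prop) : rule -> Prop :=
  fun g => R g /\ exists a, In a (head g) /\ U a.
Definition splitting (R : rule -> Prop) (U : atom -> Prop) : Prop :=
  forall g, R g -> (exists a, In a (head g) /\ U a) -> forall b, In b (rule_atoms g) -> U b.

Lemma stable_for_splitting : forall R D M U, stable_for R D M -> splitting R U ->
  stable_for (touching R U) (fun a => D a /\ U a) (fun a => M a /\ U a).
Proof.
  intros R D M U [HD [Hmod Hmin]] Hcl. split; [|split].
  - intros x [Ma Ua]; auto.
  - intros g [Rg Hh] Hneg Hpos.
    destruct (Hmod g Rg) as [a [Ha Ma]].
    + intros B HB MB. apply (Hneg B HB). split; auto. apply (Hcl g Rg Hh). apply in_neg_atoms; auto.
    + intros B HB. apply Hpos; auto.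
    + exists a. split; auto. split; auto. apply (Hcl g Rg Hh). apply in_head_atoms; auto.
  - intros N HNM HN a [Ma Ua].
    (* Outside [U], a smaller model of the restricted reduct is completed by the atoms of [M]. *)
    set (N' := fun a => N a \/ (M a /\ ~ U a)).
    assert (HN' : model_for R M N').
    { intros g Rg Hneg Hpos.
      destruct (classic (exists a, In a (head g) /\ U a)) as [Hh|Hh].
      - destruct (HN g (conj Rg Hh)) as [b [Hb Nb]].
        + intros B HB [MB UB]. apply (Hneg B HB MB).
        + intros B HB. destruct (Hpos B HB) as [NB|[_ nUB]]; auto.
          exfalso. apply nUB. apply (Hcl g Rg Hh). apply in_pos_atoms; auto.
        + exists b. split; auto. left; auto.
      - destruct (Hmod g Rg Hneg) as [b [Hb Mb]].
        + intros B HB. destruct (Hpos B HB) as [NB|[MB _]]; auto. apply HNM; auto.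
        + exists b. split; auto. right. split; auto. intro Ub. apply Hh; eauto. }
    assert (N' a) by (apply (Hmin N'); auto; intros b [Nb|[Mb _]]; auto; apply HNM; auto).
    destruct H as [Na|[_ nU]]; auto. contradiction.
Qed.

Lemma stable_for_ext : forall R1 R2 D1 D2 M, (forall g, R1 g <-> R2 g) -> (forall a, M a -> D2 a) ->
  stable_for R1 D1 M -> stable_for R2 D2 M.
Proof.
  intros R1 R2 D1 D2 M HR HD [_ [Hm Hmin]]. split; [auto|split].
  - intros g Hg. apply Hm. apply HR; auto.
  - intros N HN HmN. apply Hmin; auto. intros g Hg. apply HmN. apply HR; auto.
Qed.

Lemma stable_for_eqv : forall R D M M', (forall a, M a <-> M' a) -> stable_for R D M -> stable_for R D M'.
Proof.
  intros R D M M' E [HD [Hm Hmin]]. split; [|split].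
  - intros a Ha. apply HD, E; auto.
  - intros g Hg Hneg Hpos. destruct (Hm g Hg) as [b [Hb Mb]].
    + intros B HB MB. apply (Hneg B HB). apply E; auto.
    + intros B HB. apply E; auto.
    + exists b. split; auto. apply E; auto.
  - intros N HN HmN a Ma. apply (Hmin N).
    + intros b Nb. apply E; auto.
    + intros g Hg Hneg Hpos. apply HmN; auto. intros B HB MB. apply (Hneg B HB). apply E; auto.
    + apply E; auto.
Qed.

Definition rules_atoms (G : list rule) : list atom := concat (map rule_atoms G).

Lemma in_rules_atoms : forall G g b, In g G -> In b (rule_atoms g) -> In b (rules_atoms G).
Proof. intros. unfold rules_atoms. apply in_concat. exists (rule_atoms g). split; auto. apply in_map; auto. Qed.

Lemma rules_atoms_code : forall G, concat (map rule_atoms_code (dec_nats (enc_nats (map enc_rule G)))) = map enc_atom (rules_atoms G).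
Proof.
  intros. rewrite dec_enc_nats. unfold rules_atoms. induction G; simpl; auto.
  rewrite rule_atoms_code_enc, IHG, map_app. reflexivity.
Qed.

Lemma neg_body_code_enc : forall g, neg_body_code (enc_rule g) = map enc_atom (neg_body g).
Proof.
  intros. unfold neg_body_code, neg_body. rewrite enc_rule_eq, unpair2_cpair, dec_enc_nats.
  induction (body g) as [|[a|a] l IH]; simpl; auto.
  - rewrite unpair1_cpair. simpl. auto.
  - rewrite unpair1_cpair. simpl. rewrite unpair2_cpair. f_equal; auto.
Qed.
Lemma pos_body_code_enc : forall g, pos_body_code (enc_rule g) = map enc_atom (pos_body g).
Proof.
  intros. unfold pos_body_code, pos_body. rewrite enc_rule_eq, unpair2_cpair, dec_enc_nats.
  induction (body g) as [|[a|a] l IH]; simpl; auto.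
  - rewrite unpair1_cpair. simpl. rewrite unpair2_cpair. f_equal; auto.
  - rewrite unpair1_cpair. simpl. auto.
Qed.
Lemma head_code_enc : forall g, dec_nats (unpair1 (enc_rule g)) = map enc_atom (head g).
Proof. intros. rewrite enc_rule_eq, unpair1_cpair, dec_enc_nats. reflexivity. Qed.

Definition bit_interp (A j : nat) : atom -> Prop := fun a => bit_mem A j (enc_atom a) = true.

Lemma reduct_model_bits_spec : forall G A j j',
  reduct_model_bits (enc_nats (map enc_rule G)) A j j' = true <-> model_for (fun g => In g G) (bit_interp A j) (bit_interp A j').
Proof.
  intros. unfold reduct_model_bits, model_for, bit_interp. rewrite dec_enc_nats, forallb_forall. split.
  - intros H g Hg Hneg Hpos. specialize (H (enc_rule g) (in_map _ _ _ Hg)).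
    rewrite neg_body_code_enc, pos_body_code_enc, head_code_enc, !orb_true_iff in H.
    destruct H as [H|[H|H]].
    + exfalso. apply negb_true_iff in H. rewrite <- not_true_iff_false in H. apply H.
      apply forallb_forall. intros c Hc. apply in_map_iff in Hc. destruct Hc as [b [<- Hb]].
      apply negb_true_iff. apply not_true_iff_false. apply Hneg; auto.
    + exfalso. apply negb_true_iff in H. rewrite <- not_true_iff_false in H. apply H.
      apply forallb_forall. intros c Hc. apply in_map_iff in Hc. destruct Hc as [b [<- Hb]]. auto.
    + apply existsb_exists in H. destruct H as [c [Hc Hm]]. apply in_map_iff in Hc.
      destruct Hc as [a [<- Ha]]. eauto.
  - intros H c Hc. apply in_map_iff in Hc. destruct Hc as [g [<- Hg]].
    rewrite neg_body_code_enc, pos_body_code_enc, head_code_enc, !orb_true_iff.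
    destruct (forallb (fun b => negb (bit_mem A j b)) (map enc_atom (neg_body g))) eqn:E1; [|left; auto].
    destruct (forallb (fun b => bit_mem A j' b) (map enc_atom (pos_body g))) eqn:E2; [|right; left; auto].
    right; right. rewrite forallb_forall in E1, E2.
    destruct (H g Hg) as [a [Ha Hm]].
    + intros B HB HM. specialize (E1 (enc_atom B) (in_map _ _ _ HB)). rewrite HM in E1. discriminate.
    + intros B HB. apply E2. apply in_map; auto.
    + apply existsb_exists. exists (enc_atom a). split; auto. apply in_map; auto.
Qed.

Lemma bit_interp_sub : forall G a j, bit_interp (enc_nats (map enc_atom (rules_atoms G))) j a -> In a (rules_atoms G).
Proof.
  intros. apply bit_mem_in in H. rewrite dec_enc_nats in H. apply in_map_iff in H.
  destruct H as [b [Hb Hin]]. apply enc_atom_inj in Hb. subst; auto.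
Qed.

Lemma subset_bits_spec : forall G j' j,
  subset_bits (enc_nats (map enc_atom (rules_atoms G))) j' j = true <->
  (forall a, bit_interp (enc_nats (map enc_atom (rules_atoms G))) j' a -> bit_interp (enc_nats (map enc_atom (rules_atoms G))) j a).
Proof.
  intros. unfold subset_bits, bit_interp. rewrite dec_enc_nats, forallb_forall. split.
  - intros H a Ha. specialize (H (enc_atom a)). rewrite Ha in H. simpl in H. apply H.
    apply in_map. apply (bit_interp_sub G a j'). exact Ha.
  - intros H c Hc. apply in_map_iff in Hc. destruct Hc as [a [<- Ha]].
    destruct (bit_mem _ j' (enc_atom a)) eqn:E; simpl; auto.
Qed.

Lemma stable_bits_sound : forall G j,
  stable_bits (enc_nats (map enc_rule G)) (enc_nats (map enc_atom (rules_atoms G))) j = true ->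
  stable_for (fun g => In g G) (fun a => In a (rules_atoms G)) (bit_interp (enc_nats (map enc_atom (rules_atoms G))) j).
Proof.
  intros G j H. set (A := enc_nats (map enc_atom (rules_atoms G))) in *.
  unfold stable_bits in H. apply andb_true_iff in H. destruct H as [H1 H2]. split; [|split].
  - intros a Ha. apply (bit_interp_sub G a j). exact Ha.
  - apply reduct_model_bits_spec; auto.
  - intros N HNM HN a Ma.
    destruct (bits_surj (map enc_atom (rules_atoms G)) (fun c => exists b, enc_atom b = c /\ N b)) as [j' [Hj' Hbits]].
    assert (Eq : forall b, bit_interp A j' b <-> N b).
    { intros b. unfold bit_interp, A. rewrite Hbits. split.
      - intros [_ [b' [Hb' Nb']]]. apply enc_atom_inj in Hb'. subst; auto.
      - intros Nb. split. apply in_map. apply (bit_interp_sub G b j). apply HNM; auto. eauto. }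
    rewrite ball_spec in H2. specialize (H2 j').
    assert (Hj'' : j' < 2 ^ length (dec_nats A)) by (unfold A; rewrite dec_enc_nats; exact Hj').
    specialize (H2 Hj'').
    rewrite !orb_true_iff, !negb_true_iff in H2. destruct H2 as [H2|[H2|H2]].
    + exfalso. rewrite <- not_true_iff_false in H2. apply H2. apply subset_bits_spec.
      intros b Hb. apply HNM, Eq; auto.
    + exfalso. rewrite <- not_true_iff_false in H2. apply H2. apply reduct_model_bits_spec.
      intros g Hg Hneg Hpos. destruct (HN g Hg Hneg) as [b [Hb Nb]].
      * intros B HB. apply Eq; auto.
      * exists b. split; auto. apply Eq; auto.
    + apply Eq. apply (proj1 (subset_bits_spec G j j') H2). exact Ma.
Qed.

Lemma stable_bits_complete : forall G M,
  stable_for (fun g => In g G) (fun a => In a (rules_atoms G)) M ->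
  exists j, j < 2 ^ length (rules_atoms G) /\
    stable_bits (enc_nats (map enc_rule G)) (enc_nats (map enc_atom (rules_atoms G))) j = true.
Proof.
  intros G M [HD [Hmod Hmin]]. set (A := enc_nats (map enc_atom (rules_atoms G))).
  assert (Hset : forall Q : atom -> Prop, (forall a, Q a -> In a (rules_atoms G)) ->
     exists j, j < 2 ^ length (rules_atoms G) /\ forall b, bit_interp A j b <-> Q b).
  { intros Q HQ.
    destruct (bits_surj (map enc_atom (rules_atoms G)) (fun c => exists b, enc_atom b = c /\ Q b)) as [j [Hj Hbits]].
    exists j. rewrite length_map in Hj. split; auto. intros b. unfold bit_interp, A. rewrite Hbits. split.
    - intros [_ [b' [Hb' Qb']]]. apply enc_atom_inj in Hb'. subst; auto.
    - intros Qb. split. apply in_map; auto. eauto. }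
  destruct (Hset M HD) as [j [Hj Eq]]. exists j. split; auto.
  unfold stable_bits. apply andb_true_iff. split.
  - apply reduct_model_bits_spec. intros g Hg Hneg Hpos. destruct (Hmod g Hg) as [b [Hb Mb]].
    + intros B HB MB. apply (Hneg B HB). apply Eq; auto.
    + intros B HB. apply Eq; auto.
    + exists b. split; auto. apply Eq; auto.
  - apply ball_spec. intros j' Hj'. rewrite !orb_true_iff. unfold A in *.
    destruct (subset_bits _ j' j) eqn:E1; [|left; auto].
    destruct (reduct_model_bits (enc_nats (map enc_rule G)) _ j j') eqn:E2; [|right; left; auto].
    right; right. simpl. apply subset_bits_spec. pose proof (proj1 (subset_bits_spec G j' j) E1) as E1'. pose proof (proj1 (reduct_model_bits_spec G _ j j') E2) as E2'.
    intros a Ma. apply (Hmin (bit_interp _ j')); auto.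
    + intros b Hb. apply Eq. apply E1'; auto.
    + intros g Hg Hneg Hpos. apply E2'; auto. intros B HB HM. apply (Hneg B HB). apply Eq; auto.
    + apply Eq; auto.
Qed.

(** * Variables, grounding and finite recursion *)

Inductive var_in (x : nat) : term -> Prop :=
| var_in_Var : var_in x (Var x)
| var_in_Fn f ts u : In u ts -> var_in x u -> var_in x (Fn f ts).

Definition var_in_atom (x : nat) (a : atom) : Prop := exists t, In t (args a) /\ var_in x t.
Definition var_in_rule (x : nat) (r : rule) : Prop := exists a, In a (rule_atoms r) /\ var_in_atom x a.

Lemma subst_term_agree : forall s s' t, (forall x, var_in x t -> s x = s' x) -> subst_term s t = subst_term s' t.
Proof.
  intros s s'. induction t using term_nested_ind; intros Hag; simpl.
  - apply Hag. constructor.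
  - f_equal. apply map_ext_in. intros u Hu. rewrite Forall_forall in H. apply H; auto.
    intros x Hx. apply Hag. econstructor; eauto.
Qed.
Lemma subst_atom_agree : forall s s' a, (forall x, var_in_atom x a -> s x = s' x) -> subst_atom s a = subst_atom s' a.
Proof.
  intros. unfold subst_atom. f_equal. apply map_ext_in. intros t Ht. apply subst_term_agree.
  intros; apply H; exists t; auto.
Qed.
Lemma subst_rule_agree : forall s s' r, (forall x, var_in_rule x r -> s x = s' x) -> subst_rule s r = subst_rule s' r.
Proof.
  intros. unfold subst_rule. f_equal.
  - apply map_ext_in. intros a Ha. apply subst_atom_agree. intros x Hx. apply H. exists a. split; auto.
    apply in_head_atoms; auto.
  - apply map_ext_in. intros l Hl. destruct l as [a|a]; simpl; f_equal; apply subst_atom_agree;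
    intros x Hx; apply H; exists a; split; auto; unfold rule_atoms; apply in_or_app; right;
    apply in_map_iff; [exists (Pos a)|exists (Neg a)]; auto.
Qed.

Lemma rule_atoms_subst : forall s r, rule_atoms (subst_rule s r) = map (subst_atom s) (rule_atoms r).
Proof.
  intros. unfold rule_atoms, subst_rule. simpl. rewrite map_app. f_equal.
  rewrite !map_map. apply map_ext. intros [a|a]; reflexivity.
Qed.

Lemma enc_subst_var_le : forall s x t, var_in x t -> enc_term (s x) <= enc_term (subst_term s t).
Proof.
  intros s x t H. induction H; simpl. lia.
  pose proof (enc_arg_lt f (map (subst_term s) ts) (enc_term (subst_term s u))).
  rewrite map_map in H1. assert (In (enc_term (subst_term s u)) (map (fun x => enc_term (subst_term s x)) ts)).
  { apply in_map_iff. eauto. } specialize (H1 H2). lia.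
Qed.

Lemma var_in_le : forall x t, var_in x t -> x <= enc_term t.
Proof.
  intros x t H. induction H. rewrite enc_term_Var. apply cpair_ge2.
  pose proof (enc_arg_lt f ts (enc_term u) (in_map _ _ _ H)). lia.
Qed.

Lemma var_in_rule_le : forall P r x, In r P -> var_in_rule x r -> x <= enc_program P.
Proof.
  intros P r x Hr [a [Ha [t [Ht Hv]]]]. apply var_in_le in Hv.
  pose proof (enc_term_lt_atom a t Ht). pose proof (enc_atom_lt_rule r a Ha).
  pose proof (in_map_lt _ enc_rule P r Hr) as H3. rewrite <- enc_program_eq in H3. lia.
Qed.

Lemma sym_subterm : forall f n g ts u, In u ts -> sym_in_term f n u -> sym_in_term f n (Fn g ts).
Proof. intros. apply sym_in_term_Fn. right. eauto. Qed.

Lemma subst_in_HU : forall P s t, (forall f n, sym_in_term f n t -> sym_in_program P f n) ->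
  (forall x, in_HU P (s x)) -> in_HU P (subst_term s t).
Proof.
  intros P s. induction t using term_nested_ind; intros Hsym Hs; simpl; auto.
  constructor.
  - rewrite length_map. apply Hsym. apply sym_in_term_Fn. left; auto.
  - apply Forall_forall. intros v Hv. apply in_map_iff in Hv. destruct Hv as [u [<- Hu]].
    rewrite Forall_forall in H. apply H; auto. intros f' n' Hs'. apply Hsym. eapply sym_subterm; eauto.
Qed.

Lemma ground_rule_atoms : forall P g b, ground_rule P g -> In b (rule_atoms g) -> ground_atom P b.
Proof.
  intros P g b [r [s [Hr [Hs ->]]]] Hb. rewrite rule_atoms_subst in Hb.
  apply in_map_iff in Hb. destruct Hb as [a [<- Ha]]. unfold ground_atom, subst_atom. simpl.
  apply Forall_forall. intros v Hv. apply in_map_iff in Hv. destruct Hv as [t [<- Ht]].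
  apply subst_in_HU; auto. intros f n Hfn. exists r, a. repeat split; auto. exists t; auto.
Qed.

Lemma ground_rule_head_atom : forall P g, wf_program P -> ground_rule P g -> exists a, In a (head g).
Proof.
  intros P g Hwf [r [s [Hr [_ ->]]]]. specialize (Hwf r Hr). simpl.
  destruct (head r) as [|a l]; [congruence|]. exists (subst_atom s a). simpl; auto.
Qed.

Lemma depends_ground : forall P a b, ground_atom P a -> depends P a b -> ground_atom P b.
Proof.
  intros P a b Ha H. induction H; auto.
  destruct H as [g [Hg [_ Hb]]]. eapply ground_rule_atoms; eauto.
Qed.

Lemma HU_unbounded : forall P f n t0, sym_in_program P f n -> 0 < n -> in_HU P t0 ->
  forall K, exists t, in_HU P t /\ K < enc_term t.
Proof.
  intros P f n t0 Hs Hn Ht0 K. induction K.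
  - exists (Fn f (repeat t0 n)). split.
    + constructor. rewrite repeat_length; auto. apply Forall_forall. intros u Hu. apply repeat_spec in Hu. subst; auto.
    + rewrite enc_term_Fn. pose proof (cpair_ge2 1 (cpair f (enc_nats (map enc_term (repeat t0 n))))).
      pose proof (cpair_ge2 f (enc_nats (map enc_term (repeat t0 n)))).
      destruct n. lia. simpl in *. lia.
  - destruct IHK as [t [Ht HK]]. exists (Fn f (repeat t n)). split.
    + constructor. rewrite repeat_length; auto. apply Forall_forall. intros u Hu. apply repeat_spec in Hu. subst; auto.
    + assert (In (enc_term t) (map enc_term (repeat t n))).
      { apply in_map. destruct n. lia. simpl; auto. }
      pose proof (enc_arg_lt f _ _ H). lia.
Qed.

Lemma enc_atom_le_sum : forall (l : list atom) b, In b l -> enc_atom b <= list_sum (map enc_atom l).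
Proof. induction l; simpl; intros b H; [tauto|]. destruct H; subst. lia. specialize (IHl b H). lia. Qed.

(* Otherwise, substituting ever larger terms for the variable would give the ground head atom
   infinitely many dependencies. *)
Lemma var_in_head : forall P r h x (s : nat -> term),
  finitely_recursive P -> (exists f n, sym_in_program P f n /\ 0 < n) ->
  In r P -> In h (head r) -> (forall y, in_HU P (s y)) -> var_in_rule x r -> var_in_atom x h.
Proof.
  intros P r h x s Hfr [f [n [Hsym Hn]]] Hr Hh Hs Hx.
  destruct (classic (var_in_atom x h)) as [|Hnot]; auto. exfalso.
  set (A0 := subst_atom s h).
  assert (HgA : ground_atom P A0).
  { apply (ground_rule_atoms P (subst_rule s r)). exists r, s; auto.
    rewrite rule_atoms_subst. apply in_map. apply in_head_atoms; auto. }
  destruct (Hfr A0 HgA) as [L HL].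
  set (K := list_sum (map enc_atom L)).
  destruct (HU_unbounded P f n (s 0) Hsym Hn (Hs 0) K) as [t [Ht HK]].
  set (st := fun y => if y =? x then t else s y).
  assert (Hst : forall y, in_HU P (st y)) by (intros y; unfold st; destruct (y =? x); auto).
  destruct Hx as [b [Hb [u [Hu Hv]]]].
  assert (Hdep : depends P A0 (subst_atom st b)).
  { apply rt_step. exists (subst_rule st r). split. exists r, st; auto. split.
    - replace A0 with (subst_atom st h). simpl. apply in_map; auto.
      apply subst_atom_agree. intros y Hy. unfold st. destruct (Nat.eqb_spec y x); subst; auto. contradiction.
    - rewrite rule_atoms_subst. apply in_map; auto. }
  apply HL in Hdep. apply enc_atom_le_sum in Hdep. fold K in Hdep.
  assert (enc_term t <= enc_term (subst_term st u)).
  { replace t with (st x) by (unfold st; rewrite Nat.eqb_refl; auto). apply enc_subst_var_le; auto. }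
  assert (enc_term (subst_term st u) < enc_atom (subst_atom st b)).
  { apply enc_term_lt_atom. simpl. apply in_map; auto. }
  lia.
Qed.

(** * Bounded Herbrand terms and substitution indices *)

Lemma enc_const_le : forall f t, sym_in_term f 0 t -> cpair 1 (cpair f 0) <= enc_term t.
Proof.
  intros f. induction t using term_nested_ind; intros Hs. apply sym_in_term_Var in Hs; tauto.
  apply sym_in_term_Fn in Hs. destruct Hs as [[-> Hl]|[u [Hu Hs]]].
  - destruct ts; [|discriminate]. rewrite enc_term_Fn. simpl. lia.
  - rewrite Forall_forall in H. specialize (H u Hu Hs). pose proof (enc_arg_lt f0 ts (enc_term u) (in_map _ _ _ Hu)). lia.
Qed.

Lemma enc_const_le_program : forall P f, sym_in_program P f 0 -> enc_term (Fn f []) <= enc_program P.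
Proof.
  intros P f [r [a [Hr [Ha [t [Ht Hs]]]]]]. apply enc_const_le in Hs. rewrite enc_term_Fn. simpl enc_nats.
  pose proof (enc_term_lt_atom a t Ht). pose proof (enc_atom_lt_rule r a Ha).
  pose proof (in_map_lt _ enc_rule P r Hr) as H3. rewrite <- enc_program_eq in H3. simpl in *. lia.
Qed.

Lemma enc_program_pos : forall P r, In r P -> 1 <= enc_program P.
Proof. intros. destruct P. destruct H. rewrite enc_program_eq. simpl. lia. Qed.

Lemma enc_HU_le_program : forall P t, (forall f n, sym_in_program P f n -> n = 0) -> P <> [] ->
  in_HU P t -> enc_term t <= enc_program P.
Proof.
  intros P t Hno HP Ht. inversion Ht as [f ts Hs Hall|Hnc]; subst.
  - pose proof (Hno _ _ Hs). destruct ts; [|discriminate]. apply enc_const_le_program; auto.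
  - rewrite enc_term_Fn. replace (cpair 1 (cpair 0 (enc_nats (map enc_term [])))) with 1 by reflexivity.
    destruct P as [|r P']. contradiction. apply (enc_program_pos (r :: P') r (or_introl eq_refl)).
Qed.

Lemma small_HU_term : forall P, P <> [] -> exists t, in_HU P t /\ enc_term t <= enc_program P.
Proof.
  intros P HP. destruct (classic (exists f, sym_in_program P f 0)) as [[f Hf]|Hn].
  - exists (Fn f []). split. constructor; auto. apply enc_const_le_program; auto.
  - exists (Fn 0 []). split. apply hu_default. intros f Hf; apply Hn; eauto.
    rewrite enc_term_Fn. replace (cpair 1 (cpair 0 (enc_nats (map enc_term [])))) with 1 by reflexivity.
    destruct P as [|r P']. contradiction. apply (enc_program_pos (r :: P') r (or_introl eq_refl)).
Qed.

Lemma hu_codes_spec : forall p k c, In c (hu_codes p k) <-> c <= k /\ n2b (hu_code p c) = true.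
Proof.
  intros. unfold hu_codes. rewrite filter_In, <- in_rev, in_seq. split; intros [H1 H2]; split; auto; lia.
Qed.

Lemma digit_subst : forall P k i, 0 < length (hu_codes (enc_program P) k) ->
  exists s : nat -> term, (forall x, enc_term (s x) = digit i (enc_nats (hu_codes (enc_program P) k)) (length (hu_codes (enc_program P) k)) x)
                       /\ (forall x, in_HU P (s x)).
Proof.
  intros P k i Hpos.
  assert (H : forall x, exists t, enc_term t = digit i (enc_nats (hu_codes (enc_program P) k)) (length (hu_codes (enc_program P) k)) x /\ in_HU P t).
  { intros x. apply hu_code_sound. pose proof (digit_in i (enc_nats (hu_codes (enc_program P) k)) (length (hu_codes (enc_program P) k)) x).
    rewrite dec_enc_nats in H. specialize (H eq_refl Hpos). apply hu_codes_spec in H. tauto. }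
  destruct (choice _ H) as [s Hs]. exists s. split; intros; apply Hs.
Qed.

Lemma hu_codes_nonempty : forall P k, P <> [] -> enc_program P <= k -> 0 < length (hu_codes (enc_program P) k).
Proof.
  intros. destruct (small_HU_term P H) as [t [Ht Hc]].
  assert (In (enc_term t) (hu_codes (enc_program P) k)).
  { apply hu_codes_spec. split. lia. apply hu_code_complete; auto. }
  destruct (hu_codes (enc_program P) k); simpl in *. tauto. lia.
Qed.

Lemma subst_index : forall P k r (s : nat -> term), In r P -> enc_program P <= k ->
  (forall x, in_HU P (s x)) -> (forall x, var_in_rule x r -> enc_term (s x) <= k) ->
  exists i, i < length (hu_codes (enc_program P) k) ^ S (enc_program P) /\
    subst_rule_code i (enc_nats (hu_codes (enc_program P) k)) (length (hu_codes (enc_program P) k)) (enc_rule r) = enc_rule (subst_rule s r).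
Proof.
  intros P k r s Hr Hk Hs Hv.
  assert (HP : P <> []) by (intro; subst; destruct Hr).
  set (L := hu_codes (enc_program P) k). set (p := enc_program P).
  assert (Hpos : 0 < length L) by (apply hu_codes_nonempty; auto).
  set (v := fun x => if in_dec Nat.eq_dec (enc_term (s x)) L then enc_term (s x) else hd 0 L).
  assert (H1 : length L = length (dec_nats (enc_nats L))) by (rewrite dec_enc_nats; auto).
  assert (H3 : forall x, x <= p -> In (v x) (dec_nats (enc_nats L))).
  { intros x _. rewrite dec_enc_nats. unfold v. destruct (in_dec _ _ _); auto.
    destruct L; simpl in *. lia. auto. }
  destruct (digit_surj (enc_nats L) (length L) p v H1 Hpos H3) as [i [Hi Htau]].
  exists i. split; auto.
  destruct (digit_subst P k i Hpos) as [s' [Hs' Hhu']].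
  rewrite (subst_rule_code_spec _ _ _ s'); auto. f_equal. apply subst_rule_agree.
  intros x Hx. apply enc_term_inj. rewrite Hs'. fold L. rewrite Htau.
  - unfold v. destruct (in_dec _ _ _); auto. exfalso. apply n. apply hu_codes_spec. split. apply Hv; auto.
    apply hu_code_complete; auto.
  - eapply var_in_rule_le; eauto.
Qed.

(** * Soundness of the check *)

Lemma inconsistent_of_closed_rules : forall P Gl, wf_program P ->
  (forall g, In g Gl -> ground_rule P g) ->
  (forall g, ground_rule P g -> (exists a, In a (head g) /\ In a (rules_atoms Gl)) -> In g Gl) ->
  ~ (exists M, stable_for (fun g => In g Gl) (fun a => In a (rules_atoms Gl)) M) ->
  inconsistent P.
Proof.
  intros P Gl Hwf HgrG CL Hno [M HM]. apply stable_model_iff in HM. apply Hno.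
  exists (fun a => M a /\ In a (rules_atoms Gl)).
  apply stable_for_ext with (R1 := touching (ground_rule P) (fun a => In a (rules_atoms Gl)))
                            (D1 := fun a => ground_atom P a /\ In a (rules_atoms Gl)).
  - intros g. split.
    + intros [Hg Hh]. apply CL; auto.
    + intros Hg. split; auto. destruct (ground_rule_head_atom P g Hwf (HgrG g Hg)) as [a Ha].
      exists a. split; auto. apply (in_rules_atoms Gl g); auto. apply in_head_atoms; auto.
  - intros a [_ Ha]; auto.
  - apply stable_for_splitting; auto. intros g Hg Hh b Hb. apply (in_rules_atoms Gl g); auto.
Qed.

Lemma instances_ok_sound : forall P k Gc,
  let p := enc_program P in let L := hu_codes p k in
  instances_ok p Gc (enc_nats L) (length L) (length L ^ S p) = true ->
  exists Gl, Gc = enc_nats (map enc_rule Gl) /\ forall g, In g Gl -> ground_rule P g.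
Proof.
  intros P k Gc p L H.
  assert (Hgr : forall c, In c (dec_nats Gc) -> exists g, c = enc_rule g /\ ground_rule P g).
  { intros c Hc. unfold instances_ok in H. rewrite forallb_forall in H. specialize (H c Hc).
    apply existsb_exists in H. destruct H as [rc [Hrc Hex]]. apply bex_spec in Hex.
    destruct Hex as [i [Hi Heq]]. apply Nat.eqb_eq in Heq.
    unfold p in Hrc. rewrite enc_program_eq, dec_enc_nats in Hrc. apply in_map_iff in Hrc.
    destruct Hrc as [r [<- Hr]].
    assert (Hpos : 0 < length L) by (destruct (length L); [simpl in Hi; lia | lia]).
    destruct (digit_subst P k i Hpos) as [s [Hs Hhu]].
    rewrite (subst_rule_code_spec _ _ _ s) in Heq by (intros; rewrite Hs; reflexivity).
    exists (subst_rule s r). split; auto. exists r, s; auto. }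
  destruct (list_choice _ _ (fun c g => c = enc_rule g /\ ground_rule P g) (dec_nats Gc) Hgr)
    as [Gl HGl].
  exists Gl. split.
  - rewrite <- (enc_dec_nats Gc). f_equal. clear -HGl.
    induction HGl as [|g c Gl cs [-> _] _ IH]; simpl; congruence.
  - clear -HGl. induction HGl as [|g c Gl cs Hg _ IH]; simpl; [tauto|].
    intros g' [<-|Hg']; [exact (proj2 Hg)|auto].
Qed.

(* Either the Herbrand universe is finite, and then all its terms have codes at most
   [enc_program P], or finite recursion puts every variable of [r] into the head atom [h]. *)
Lemma instance_vars_bounded : forall P k r h (s : nat -> term) x,
  finitely_recursive P -> In r P -> In h (head r) -> (forall y, in_HU P (s y)) ->
  enc_program P <= k -> (forall t, In t (args (subst_atom s h)) -> enc_term t <= k) ->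
  var_in_rule x r -> enc_term (s x) <= k.
Proof.
  intros P k r h s x Hfr Hr Hh Hs Hk Hbd Hx.
  destruct (classic (exists f n, sym_in_program P f n /\ 0 < n)) as [Hpos|Hno].
  - destruct (var_in_head P r h x s Hfr Hpos Hr Hh Hs Hx) as [t [Ht Hvt]].
    pose proof (enc_subst_var_le s x t Hvt).
    assert (enc_term (subst_term s t) <= k) by (apply Hbd; simpl; apply in_map; auto). lia.
  - assert (Hz : forall f n, sym_in_program P f n -> n = 0).
    { intros f n Hfn. destruct n; auto. exfalso. apply Hno. exists f, (S n). split; auto. lia. }
    assert (HP : P <> []) by (intro; subst; destruct Hr).
    pose proof (enc_HU_le_program P (s x) Hz HP (Hs x)). lia.
Qed.

Lemma heads_closed_sound : forall P k Gl,
  finitely_recursive P -> enc_program P <= k ->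
  (forall a t, In a (rules_atoms Gl) -> In t (args a) -> enc_term t <= k) ->
  let p := enc_program P in let L := hu_codes p k in
  heads_closed p (enc_nats (map enc_rule Gl)) (enc_nats L) (length L) (length L ^ S p)
    (enc_nats (map enc_atom (rules_atoms Gl))) = true ->
  forall g, ground_rule P g -> (exists a, In a (head g) /\ In a (rules_atoms Gl)) -> In g Gl.
Proof.
  intros P k Gl Hfr Hk Hbd p L HC g [r [s [Hr [Hs ->]]]] [a [Ha HaG]].
  simpl in Ha. apply in_map_iff in Ha. destruct Ha as [h [<- Hh]].
  destruct (subst_index P k r s Hr Hk Hs) as [i [Hi Heq]].
  { intros x. apply (instance_vars_bounded P k r h s x); auto. intros t. apply (Hbd _ t HaG). }
  fold p L in Hi, Heq.
  unfold heads_closed in HC. rewrite forallb_forall in HC.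
  assert (Hrc : In (enc_rule r) (dec_nats p))
    by (unfold p; rewrite enc_program_eq, dec_enc_nats; apply in_map; auto).
  specialize (HC _ Hrc). rewrite ball_spec in HC. specialize (HC i Hi).
  rewrite Heq, orb_true_iff in HC. destruct HC as [HC|HC].
  - exfalso. apply negb_true_iff in HC. rewrite <- not_true_iff_false in HC. apply HC.
    apply existsb_exists. exists (enc_atom (subst_atom s h)). split.
    + rewrite head_code_enc. apply in_map. simpl. apply in_map; auto.
    + apply existsb_exists. exists (enc_atom (subst_atom s h)). rewrite dec_enc_nats. split.
      * apply in_map; auto.
      * apply Nat.eqb_refl.
  - apply existsb_exists in HC. destruct HC as [y [Hy Heqy]]. apply Nat.eqb_eq in Heqy.
    rewrite dec_enc_nats in Hy. subst y. apply in_map_iff in Hy. destruct Hy as [g' [Hg' Hin]].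
    apply enc_rule_inj in Hg'. subst; auto.
Qed.

Lemma terms_bounded_spec : forall k As,
  terms_bounded k (enc_nats (map enc_atom As)) = true <->
  forall a t, In a As -> In t (args a) -> enc_term t <= k.
Proof.
  intros. unfold terms_bounded. rewrite dec_enc_nats, forallb_forall. split.
  - intros H a t Ha Ht. specialize (H _ (in_map _ _ _ Ha)). rewrite forallb_forall in H.
    apply Nat.leb_le, H. rewrite enc_atom_eq, unpair2_cpair, dec_enc_nats. apply in_map; auto.
  - intros H c Hc. apply in_map_iff in Hc. destruct Hc as [a [<- Ha]]. rewrite forallb_forall.
    intros c Hc. rewrite enc_atom_eq, unpair2_cpair, dec_enc_nats in Hc. apply in_map_iff in Hc.
    destruct Hc as [t [<- Ht]]. apply Nat.leb_le. apply (H a); auto.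
Qed.

Lemma no_stable_bits_spec : forall G,
  no_stable_bits (enc_nats (map enc_rule G)) (enc_nats (map enc_atom (rules_atoms G))) = true <->
  ~ exists M, stable_for (fun g => In g G) (fun a => In a (rules_atoms G)) M.
Proof.
  intros G. unfold no_stable_bits. rewrite ball_spec, dec_enc_nats, length_map. split.
  - intros H [M HM]. destruct (stable_bits_complete G M HM) as [j [Hj Hs]].
    specialize (H j Hj). rewrite Hs in H. discriminate.
  - intros Hno j Hj. apply negb_true_iff. destruct (stable_bits _ _ j) eqn:E; auto.
    exfalso. apply Hno. eexists. apply stable_bits_sound; eauto.
Qed.

Theorem accepts_sound : forall P w, wf_program P -> finitely_recursive P ->
  accepts (enc_program P) w = true -> inconsistent P.
Proof.
  intros P w Hwf Hfr HAcc. unfold accepts in HAcc. cbv zeta in HAcc.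
  rewrite !andb_true_iff, Nat.leb_le in HAcc. destruct HAcc as [HC1 [HC2 [HC3 [Hk HC4]]]].
  destruct (instances_ok_sound P _ _ HC1) as [Gl [HGc HgrG]].
  rewrite HGc, rules_atoms_code in HC2, HC3, HC4.
  rewrite terms_bounded_spec in HC3. rewrite no_stable_bits_spec in HC4.
  apply (inconsistent_of_closed_rules P Gl Hwf HgrG); auto.
  exact (heads_closed_sound P _ Gl Hfr Hk HC3 HC2).
Qed.

(** * Compactness *)

Definition decide (Q : Prop) : bool := if excluded_middle_informative Q then true else false.
Lemma decide_spec : forall Q, decide Q = true <-> Q.
Proof. intros. unfold decide. destruct (excluded_middle_informative Q); split; auto; discriminate. Qed.

Definition level_family (P : program) (Ul : nat -> list atom) : Prop :=
  forall n b, In b (Ul n) <-> exists a, ground_atom P a /\ enc_atom a < n /\ depends P a b.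

Lemma level_family_exists : forall P, finitely_recursive P -> exists Ul, level_family P Ul.
Proof.
  intros P Hfr. apply (choice (fun n Ul => forall b, In b Ul <->
    exists a, ground_atom P a /\ enc_atom a < n /\ depends P a b)).
  intros n. induction n.
  - exists []. intros b. split; [simpl; tauto|]. intros [a [_ [H _]]]. lia.
  - destruct IHn as [Ul HUl].
    destruct (classic (exists a, ground_atom P a /\ enc_atom a = n)) as [[a [Ha Hc]]|Hno].
    + destruct (Hfr a Ha) as [L HL].
      exists (Ul ++ filter (fun b => decide (depends P a b)) L). intros b.
      rewrite in_app_iff, filter_In, HUl, decide_spec. split.
      * intros [[a' [H1 [H2 H3]]]|[_ H]]. exists a'; repeat split; auto; lia. exists a; repeat split; auto; lia.
      * intros [a' [H1 [H2 H3]]]. destruct (Nat.eq_dec (enc_atom a') n).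
        -- right. assert (a' = a) by (apply enc_atom_inj; congruence). subst. split; auto.
        -- left. exists a'; repeat split; auto; lia.
    + exists Ul. intros b. rewrite HUl. split.
      * intros [a' [H1 [H2 H3]]]. exists a'; repeat split; auto; lia.
      * intros [a' [H1 [H2 H3]]]. exists a'; repeat split; auto.
        destruct (Nat.eq_dec (enc_atom a') n); [|lia]. exfalso. apply Hno; eauto.
Qed.

Fixpoint sublists {X : Type} (l : list X) : list (list X) :=
  match l with [] => [[]] | x :: r => map (cons x) (sublists r) ++ sublists r end.

Lemma sublists_spec : forall (X : Type) (l : list X) (Q : X -> Prop),
  exists c, In c (sublists l) /\ forall a, In a c <-> Q a /\ In a l.
Proof.
  induction l as [|x l IH]; intros Q.
  - exists []. simpl. split; auto. tauto.
  - destruct (IH Q) as [c0 [Hc0 Hs]]. destruct (classic (Q x)) as [Qx|nQx].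
    + exists (x :: c0). split. simpl. apply in_or_app. left. apply in_map; auto.
      intros a. simpl. rewrite Hs. split.
      * intros [<-|[Qa Ha]]; auto.
      * intros [Qa [<-|Ha]]; auto.
    + exists c0. split. simpl. apply in_or_app. right; auto.
      intros a. simpl. rewrite Hs. split.
      * intros [Qa Ha]; auto.
      * intros [Qa [<-|Ha]]; auto. contradiction.
Qed.

Definition level_stable (P : program) (Ul : nat -> list atom) (n : nat) (M : atom -> Prop) : Prop :=
  stable_for (touching (ground_rule P) (fun a => In a (Ul n))) (fun a => In a (Ul n)) M.

Lemma level_mono : forall P Ul, level_family P Ul -> forall n m b, n <= m -> In b (Ul n) -> In b (Ul m).
Proof.
  intros P Ul HU n m b Hnm Hb. apply HU in Hb. apply HU. destruct Hb as [a [H1 [H2 H3]]].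
  exists a; repeat split; auto; lia.
Qed.

Lemma level_splitting : forall P Ul, level_family P Ul -> forall n, splitting (ground_rule P) (fun a => In a (Ul n)).
Proof.
  intros P Ul HU n g Hg [a [Ha HaU]] b Hb. apply HU in HaU. apply HU.
  destruct HaU as [a0 [H1 [H2 H3]]]. exists a0; repeat split; auto.
  eapply rt_trans; eauto. apply rt_step. exists g; auto.
Qed.

Lemma level_ground : forall P Ul, level_family P Ul -> forall n b, In b (Ul n) -> ground_atom P b.
Proof.
  intros P Ul HU n b Hb. apply HU in Hb. destruct Hb as [a [H1 [H2 H3]]]. eapply depends_ground; eauto.
Qed.

Lemma level_cover : forall P Ul, level_family P Ul -> forall a, ground_atom P a -> In a (Ul (S (enc_atom a))).
Proof. intros P Ul HU a Ha. apply HU. exists a; repeat split; auto. apply rt_refl. Qed.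

Lemma level_stable_restrict : forall P Ul, level_family P Ul -> forall n m M, n <= m -> level_stable P Ul m M ->
  level_stable P Ul n (fun a => M a /\ In a (Ul n)).
Proof.
  intros P Ul HU n m M Hnm Hst. unfold level_stable in *.
  eapply stable_for_ext; [| |apply (stable_for_splitting _ _ _ (fun a => In a (Ul n)) Hst)].
  - intros g. unfold touching. split.
    + intros [[Hg _] Hh]; auto.
    + intros [Hg [a [Ha HaU]]]. split; [split|]; eauto. exists a; split; auto. eapply level_mono; eauto.
  - intros a [_ H]; auto.
  - intros g [Hg _] Hh b Hb. apply (level_splitting P Ul HU n g Hg Hh b Hb).
Qed.

Definition extendable (P : program) (Ul : nat -> list atom) (n : nat) (c : list atom) : Prop :=
  forall m, n <= m -> exists M, level_stable P Ul m M /\ forall a, In a (Ul n) -> (M a <-> In a c).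

Lemma common_bound : forall (X : Type) (Q : X -> nat -> Prop) (Cs : list X) n0,
  (forall c, In c Cs -> exists m, n0 <= m /\ Q c m) ->
  exists mm, n0 <= mm /\ forall c, In c Cs -> exists m, m <= mm /\ n0 <= m /\ Q c m.
Proof.
  intros X Q. induction Cs; intros n0 H.
  - exists n0. split; auto. intros c [].
  - destruct (H a (or_introl eq_refl)) as [m [Hm HQ]].
    destruct (IHCs n0) as [mm [Hmm Hall]]. intros; apply H; right; auto.
    exists (Nat.max m mm). split. lia. intros c [<-|Hc].
    + exists m. repeat split; auto. lia.
    + destruct (Hall c Hc) as [m' [H1 [H2 H3]]]. exists m'. repeat split; auto. lia.
Qed.

Lemma extendable_step : forall P Ul, level_family P Ul -> forall n c, extendable P Ul n c ->
  exists c', extendable P Ul (S n) c' /\ forall a, In a (Ul n) -> (In a c' <-> In a c).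
Proof.
  intros P Ul HU n c Hg. apply NNPP. intros Hno.
  (* Otherwise every candidate restriction to [Ul (S n)] fails from some level on; a stable
     model at a level above all these failures refutes the candidate it restricts to. *)
  set (cond := fun c' => forall a, In a (Ul n) -> (In a c' <-> In a c)).
  set (Bad := fun c' m => cond c' -> ~ exists M, level_stable P Ul m M /\ forall a, In a (Ul (S n)) -> (M a <-> In a c')).
  assert (Hb : forall c', In c' (sublists (Ul (S n))) -> exists m, S n <= m /\ Bad c' m).
  { intros c' _. destruct (classic (cond c')) as [Hc|Hc].
    - assert (~ extendable P Ul (S n) c') by (intro; apply Hno; eauto).
      unfold extendable in H. apply not_all_ex_not in H. destruct H as [m Hm].
      apply imply_to_and in Hm. destruct Hm as [Hm1 Hm2]. exists m. split; auto. intros _; auto.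
    - exists (S n). split; auto. intros Hc'; contradiction. }
  destruct (common_bound _ Bad _ (S n) Hb) as [mm [Hmm Hall]].
  destruct (Hg mm) as [M [HM Hres]]. lia.
  destruct (sublists_spec _ (Ul (S n)) M) as [c'' [Hc'' Hspec]].
  destruct (Hall c'' Hc'') as [m [Hm1 [Hm2 Hbad]]].
  apply Hbad.
  - intros a Ha. rewrite Hspec, <- Hres by auto. split; [intros [H _]; auto|].
    intros H. split; auto. apply (level_mono P Ul HU n (S n) a); auto.
  - exists (fun a => M a /\ In a (Ul m)). split. apply (level_stable_restrict P Ul HU m mm M Hm1 HM).
    intros a Ha. rewrite Hspec. split; [intros [H _]; auto|]. intros [H _]; split; auto. eapply level_mono; eauto.
Qed.

Lemma extendable_chain : forall P Ul, level_family P Ul -> extendable P Ul 0 [] ->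
  exists sq : nat -> list atom, (forall n, extendable P Ul n (sq n)) /\
    forall n m a, n <= m -> In a (Ul n) -> (In a (sq m) <-> In a (sq n)).
Proof.
  intros P Ul HU H0.
  assert (Hst : forall x : nat * list atom, exists y, extendable P Ul (fst x) (snd x) ->
    extendable P Ul (S (fst x)) y /\ forall a, In a (Ul (fst x)) -> (In a y <-> In a (snd x))).
  { intros [n c]. simpl. destruct (classic (extendable P Ul n c)) as [Hg|Hg].
    - destruct (extendable_step P Ul HU n c Hg) as [c' Hc']. eauto.
    - exists []. intros; contradiction. }
  destruct (choice _ Hst) as [next Hnext].
  set (sq := fix sq (n : nat) : list atom := match n with 0 => [] | S m => next (m, sq m) end).
  assert (Hgood : forall n, extendable P Ul n (sq n)).
  { induction n. exact H0. apply (Hnext (n, sq n)). exact IHn. }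
  exists sq. split; auto. intros n m a Hnm Ha. induction Hnm as [|m Hnm IH]; [tauto|].
  rewrite <- IH. apply (Hnext (m, sq m) (Hgood m)). eapply level_mono; eauto.
Qed.

Lemma stable_model_of_levels : forall P Ul M, wf_program P -> level_family P Ul ->
  herbrand_interp P M -> (forall n, level_stable P Ul n (fun a => M a /\ In a (Ul n))) ->
  stable_model P M.
Proof.
  intros P Ul M Hwf HU HM HMn. apply stable_model_iff. split; [exact HM|split].
  - intros g Hg Hneg Hpos. destruct (ground_rule_head_atom P g Hwf Hg) as [a0 Ha0].
    set (n := S (enc_atom a0)).
    assert (Htouch : exists a, In a (head g) /\ In a (Ul n)).
    { exists a0. split; auto. apply (level_cover P Ul HU).
      apply (ground_rule_atoms P g); auto. apply in_head_atoms; auto. }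
    assert (Hcl : forall b, In b (rule_atoms g) -> In b (Ul n))
      by (apply (level_splitting P Ul HU n g Hg Htouch)).
    destruct (proj1 (proj2 (HMn n)) g) as [b [Hb [Mb _]]].
    + split; auto.
    + intros B HB [MB _]. exact (Hneg B HB MB).
    + intros B HB. split; auto. apply Hcl, in_pos_atoms; auto.
    + exists b; auto.
  - intros N HNM HN a Ma.
    set (n := S (enc_atom a)).
    assert (Ha : In a (Ul n)) by (apply (level_cover P Ul HU); auto).
    apply (proj2 (proj2 (HMn n)) (fun b => N b /\ In b (Ul n))); [| |split; auto].
    + intros b [Nb Hb]. split; auto.
    + intros g [Hg Htouch] Hneg Hpos.
      assert (Hcl : forall b, In b (rule_atoms g) -> In b (Ul n))
        by (apply (level_splitting P Ul HU n g Hg Htouch)).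
      destruct (HN g Hg) as [b [Hb Nb]].
      * intros B HB MB. apply (Hneg B HB). split; auto. apply Hcl, in_neg_atoms; auto.
      * intros B HB. apply Hpos; auto.
      * exists b. split; auto. split; auto. apply Hcl, in_head_atoms; auto.
Qed.

(* König's lemma: the finitely many candidate restrictions to each level form a finitely
   branching tree whose infinite branch is a stable model of [P]. *)
Theorem stable_model_of_level_models : forall P Ul, wf_program P -> level_family P Ul ->
  (forall n, exists M, level_stable P Ul n M) -> exists M, stable_model P M.
Proof.
  intros P Ul Hwf HU Hall.
  assert (H0 : extendable P Ul 0 []).
  { intros m _. destruct (Hall m) as [M HM]. exists M. split; auto.
    intros a Ha. apply HU in Ha. destruct Ha as [a' [_ [H _]]]. lia. }
  destruct (extendable_chain P Ul HU H0) as [sq [Hgood Hcoh]].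
  set (M := fun a => exists n, In a (Ul n) /\ In a (sq n)).
  assert (HMn : forall n a, In a (Ul n) -> (M a <-> In a (sq n))).
  { intros n a Ha. split; [|intros Hs; exists n; auto]. intros [m [Hm Hs]].
    rewrite <- (Hcoh n (Nat.max n m) a) by (auto; lia).
    rewrite (Hcoh m (Nat.max n m) a) by (auto; lia). auto. }
  exists M. apply (stable_model_of_levels P Ul M Hwf HU).
  - intros a [n [Ha _]]. eapply level_ground; eauto.
  - intros n. destruct (Hgood n n (le_n n)) as [M' [HM' Hres]]. eapply stable_for_eqv; [|exact HM'].
    intros a. split.
    + intros Ma. assert (Ha : In a (Ul n)) by (apply (proj1 HM'); auto).
      split; auto. apply (proj2 (HMn n a Ha)), Hres; auto.
    + intros [Ma Ha]. apply Hres, (proj1 (HMn n a Ha)); auto.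
Qed.

(** * Completeness of the check *)

Fixpoint lists_of {X : Type} (k : nat) (xs : list X) : list (list X) :=
  match k with 0 => [[]] | S k' => flat_map (fun x => map (cons x) (lists_of k' xs)) xs end.

Lemma lists_of_spec : forall (X : Type) (xs : list X) l, (forall y, In y l -> In y xs) -> In l (lists_of (length l) xs).
Proof.
  induction l; intros H; simpl; auto. apply in_flat_map. exists a. split. apply H; simpl; auto.
  apply in_map. apply IHl. intros; apply H; simpl; auto.
Qed.

Lemma touching_rules_finite : forall P (U : list atom), splitting (ground_rule P) (fun a => In a U) ->
  exists Gl : list rule, forall g, In g Gl <-> ground_rule P g /\ exists a, In a (head g) /\ In a U.
Proof.
  intros P U Hcl.
  set (Cand := flat_map (fun r => flat_map (fun h => map (fun b => Rule h b)
                 (lists_of (length (body r)) (map Pos U ++ map Neg U))) (lists_of (length (head r)) U)) P).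
  exists (filter (fun g => decide (ground_rule P g /\ exists a, In a (head g) /\ In a U)) Cand).
  intros g. rewrite filter_In, decide_spec. split; [tauto|]. intros [Hg Hh]. refine (conj _ (conj Hg Hh)).
  destruct Hg as [r [s [Hr [Hs Eg]]]].
  assert (Hall : forall b, In b (rule_atoms g) -> In b U).
  { intros b Hb. apply (Hcl g); auto. exists r, s; auto. }
  unfold Cand. apply in_flat_map. exists r. split; auto. apply in_flat_map. exists (head g). split.
  - rewrite Eg. simpl. rewrite <- (length_map (subst_atom s)). apply lists_of_spec.
    intros y Hy. apply Hall. rewrite Eg. apply in_head_atoms. simpl. auto.
  - apply in_map_iff. exists (body g). split. destruct g; auto.
    rewrite Eg. simpl. rewrite <- (length_map (subst_literal s)). apply lists_of_spec.
    intros y Hy. apply in_or_app. destruct y as [b|b]; [left|right]; apply in_map; apply Hall;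
    rewrite Eg; unfold rule_atoms; apply in_or_app; right; simpl;
    apply in_map_iff; [exists (Pos b)|exists (Neg b)]; auto.
Qed.

Lemma instances_ok_complete : forall P k Gl, enc_program P <= k ->
  (forall g, In g Gl -> ground_rule P g) ->
  (forall a t, In a (rules_atoms Gl) -> In t (args a) -> enc_term t <= k) ->
  let p := enc_program P in let L := hu_codes p k in
  instances_ok p (enc_nats (map enc_rule Gl)) (enc_nats L) (length L) (length L ^ S p) = true.
Proof.
  intros P k Gl Hk Hgr Hbd p L.
  unfold instances_ok. rewrite dec_enc_nats, forallb_forall. intros c Hc. apply in_map_iff in Hc.
  destruct Hc as [g [<- Hg]]. destruct (Hgr g Hg) as [r [s [Hr [Hs Eg]]]].
  assert (Hb : forall x, var_in_rule x r -> enc_term (s x) <= k).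
  { intros x [b [Hb [t [Ht Hv]]]]. pose proof (enc_subst_var_le s x t Hv).
    assert (Hsb : In (subst_atom s b) (rules_atoms Gl)).
    { apply (in_rules_atoms Gl g); auto. rewrite Eg, rule_atoms_subst. apply in_map; auto. }
    assert (Hst : In (subst_term s t) (args (subst_atom s b))) by (simpl; apply in_map; auto).
    pose proof (Hbd _ _ Hsb Hst). lia. }
  destruct (subst_index P k r s Hr Hk Hs Hb) as [i [Hi Heq]]. fold p L in Hi, Heq.
  apply existsb_exists. exists (enc_rule r). split.
  - unfold p. rewrite enc_program_eq, dec_enc_nats. apply in_map; auto.
  - apply bex_spec. exists i. split; auto. rewrite Heq, Eg. apply Nat.eqb_refl.
Qed.

Lemma heads_closed_complete : forall P k Gl,
  (forall g, ground_rule P g -> (exists a, In a (head g) /\ In a (rules_atoms Gl)) -> In g Gl) ->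
  let p := enc_program P in let L := hu_codes p k in
  heads_closed p (enc_nats (map enc_rule Gl)) (enc_nats L) (length L) (length L ^ S p)
    (enc_nats (map enc_atom (rules_atoms Gl))) = true.
Proof.
  intros P k Gl CL p L.
  unfold heads_closed. rewrite forallb_forall. intros rc Hrc. apply ball_spec. intros i Hi.
  unfold p in Hrc. rewrite enc_program_eq, dec_enc_nats in Hrc. apply in_map_iff in Hrc.
  destruct Hrc as [r [<- Hr]].
  assert (Hpos : 0 < length L) by (destruct (length L); [simpl in Hi; lia | lia]).
  destruct (digit_subst P k i Hpos) as [s [Hs Hhu]]. fold p L in Hs.
  rewrite (subst_rule_code_spec _ _ _ s) by (intros; rewrite Hs; reflexivity).
  destruct (existsb _ (dec_nats (unpair1 (enc_rule (subst_rule s r))))) eqn:E; simpl; auto.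
  apply existsb_exists in E. destruct E as [c [Hc Hm]]. rewrite head_code_enc in Hc.
  apply in_map_iff in Hc. destruct Hc as [a [<- Ha]].
  apply existsb_exists in Hm. destruct Hm as [y [Hy Hya]]. apply Nat.eqb_eq in Hya. subst y.
  rewrite dec_enc_nats in Hy. apply in_map_iff in Hy. destruct Hy as [a' [Ha' Hin]].
  apply enc_atom_inj in Ha'. subst a'.
  apply existsb_exists. exists (enc_rule (subst_rule s r)). split; [|apply Nat.eqb_refl].
  rewrite dec_enc_nats. apply in_map. apply CL; [exists r, s; auto|exists a; split; auto].
Qed.

Theorem accepts_complete : forall P, wf_program P -> finitely_recursive P -> inconsistent P ->
  exists w, accepts (enc_program P) w = true.
Proof.
  intros P Hwf Hfr Hinc.
  destruct (level_family_exists P Hfr) as [Ul HU].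
  destruct (not_all_ex_not _ _ (fun Hall => Hinc (stable_model_of_level_models P Ul Hwf HU Hall)))
    as [n Hn].
  destruct (touching_rules_finite P (Ul n) (level_splitting P Ul HU n)) as [Gl HGl].
  assert (HatU : forall b, In b (rules_atoms Gl) -> In b (Ul n)).
  { intros b Hb. apply in_concat in Hb. destruct Hb as [l [Hl Hb]].
    apply in_map_iff in Hl. destruct Hl as [g [<- Hg]]. apply HGl in Hg. destruct Hg as [Hg Hh].
    apply (level_splitting P Ul HU n g Hg Hh b Hb). }
  assert (CL : forall g, ground_rule P g ->
                 (exists a, In a (head g) /\ In a (rules_atoms Gl)) -> In g Gl).
  { intros g Hg [a [Ha HaG]]. apply HGl. split; eauto. }
  assert (Hnost : ~ exists M, stable_for (fun g => In g Gl) (fun a => In a (rules_atoms Gl)) M).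
  { intros [M HM]. apply Hn. exists M. unfold level_stable. eapply stable_for_ext; [| |exact HM].
    - intros g. rewrite HGl. unfold touching. tauto.
    - intros a Ma. apply HatU. apply (proj1 HM); auto. }
  set (k := enc_program P + list_sum (map enc_atom (rules_atoms Gl))).
  assert (Hbd : forall a t, In a (rules_atoms Gl) -> In t (args a) -> enc_term t <= k).
  { intros a t Ha Ht. pose proof (enc_term_lt_atom a t Ht). pose proof (enc_atom_le_sum _ a Ha).
    unfold k. lia. }
  assert (Hk : enc_program P <= k) by (unfold k; lia).
  exists (cpair k (enc_nats (map enc_rule Gl))). unfold accepts. cbv zeta.
  rewrite unpair1_cpair, unpair2_cpair, rules_atoms_code, !andb_true_iff, Nat.leb_le.
  repeat split.
  - exact (instances_ok_complete P k Gl Hk (fun g Hg => proj1 (proj1 (HGl g) Hg)) Hbd).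
  - exact (heads_closed_complete P k Gl CL).
  - apply terms_bounded_spec; exact Hbd.
  - exact Hk.
  - apply no_stable_bits_spec; exact Hnost.
Qed.

Theorem theorem5p1 :
  exists e : mu, forall P : program,
    wf_program P -> finitely_recursive P ->
    (halts e (enc_program P) <-> inconsistent P).
Proof.
  exists semidecider. intros P Hwf Hfr. rewrite halts_semidecider. split.
  - intros [w Hw]. exact (accepts_sound P w Hwf Hfr Hw).
  - exact (accepts_complete P Hwf Hfr).
Qed.
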